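(* Let $\Gamma$ be a countably infinite group, $\Sigma=\{\Gamma_n\}$ finite-index normal subgroups with $\bigcap_n\bigcup_{i\ge n}\Gamma_i=\{e\}$, and $f\in\mathbb{Z}\Gamma$ well-balanced. Then $$h_\Sigma(\mathcal F_f,\Gamma)\le\limsup_{n\to\infty}[\Gamma:\Gamma_n]^{-1}\log\tau(C_n^f).$$
   Context: Well-balanced: $\sum_sf_s=0$, $f_s\le0$ for $s\ne e$, $f_s=f_{s^{-1}}$, support generates $\Gamma$. $C(\Gamma,f)$: vertex set $\Gamma$, $|f_s|$ edges joining $v$ and $vs$ for each $v$, $s\ne e$. $C_n^f$: quotient of $C(\Gamma,f)$ by the left $\Gamma_n$-action; $\tau$ = number of spanning trees. $S=\{s\ne e:f_s\ne0\}$; $S_*$ = set of edges of $C(\Gamma,f)$ with endpoint $e$; $p(s_* )=g$ if $s_*$ has endpoints $\{e,g\}$; $s_*^{-1}:=s^{-1}s_*$ where $s=p(s_* )$. $\mathcal F_f\subset S_*^\Gamma$ is the set of $y$ with (1) $y_g=s_*$, $p(s_* )=s$ implies $y_{gs}\ne s_*^{-1}$; (2) no $g_1,\dots,g_n\in\Gamma$, $s_i\in S$ with $g_is_i=g_{i+1}$, $g_1=g_n$, $p(y_{g_i})=s_i$ for $1\le i\le n-1$. Γ acts by the shift $(sy)_t=y_{s^{-1}t}$. Topological sofic entropy $h_\Sigma$: for a dynamically generating continuous pseudometric $\rho$ (e.g. $\rho(x,y)=1$ if $x_e\ne y_e$, else $0$), $h_\Sigma=\sup_\varepsilon\inf_W\inf_\delta\limsup_n[\Gamma:\Gamma_n]^{-1}\log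 N_\varepsilon(\mathrm{Map}(W,\delta,\Gamma_n),\rho_\infty)$ with $\mathrm{Map}(W,\delta,\Gamma_n)$ the maps $\varphi:\Gamma/\Gamma_n\to X$ satisfying $\big([\Gamma:\Gamma_n]^{-1}\sum_{g\Gamma_n}\rho(\varphi(sg\Gamma_n),s\varphi(g\Gamma_n))^2\big)^{1/2}\le\delta$ for all $s\in W$, $N_\varepsilon$ the max size of an $\varepsilon$-separated set; independent of $\rho$ and unchanged with $\rho_2$ in place of $\rho_\infty$. *)

From Stdlib Require Import Reals List Arith ZArith Classical ClassicalEpsilon.
Import ListNotations.
Set Implicit Arguments.
Unset Strict Implicit.

Record group := Group {
  gcar :> Type;
  gmul : gcar -> gcar -> gcar;
  ginv : gcar -> gcar;
  gone : gcar;
  gmulA : forall x y z, gmul x (gmul y z) = gmul (gmul x y) z;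
  gmul1l : forall x, gmul gone x = x;
  gmul1r : forall x, gmul x gone = x;
  gmulVl : forall x, gmul (ginv x) x = gone;
  gmulVr : forall x, gmul x (ginv x) = gone }.

Arguments gmul {g}.
Arguments ginv {g}.
Arguments gone {g}.

Definition countably_infinite (G : group) : Prop :=
  exists en : nat -> G, (forall m n, en m = en n -> m = n) /\ (forall g, exists n, en n = g).

Definition normal_subgroup (G : group) (H : G -> Prop) : Prop :=
  H gone /\ (forall x y, H x -> H y -> H (gmul x y)) /\ (forall x, H x -> H (ginv x)) /\
  (forall g x, H x -> H (gmul (gmul g x) (ginv g))).

Definition transversal (G : group) (H : G -> Prop) (R : list G) : Prop :=
  (forall g, exists r, In r R /\ H (gmul (ginv r) g)) /\ NoDup R /\
  (forall r r', In r R -> In r' R -> H (gmul (ginv r) r') -> r = r').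

Definition finite_index (G : group) (H : G -> Prop) : Prop := exists R, transversal H R.

(* a chosen transversal, the index [G:H], and the coset index map G -> {0..index-1} *)
Definition reps (G : group) (H : G -> Prop) : list G := epsilon (inhabits []) (transversal H).
Definition index (G : group) (H : G -> Prop) : nat := length (reps H).
Definition rep (G : group) (H : G -> Prop) (i : nat) : G := nth i (reps H) gone.
Definition cidx (G : group) (H : G -> Prop) (g : G) : nat :=
  epsilon (inhabits 0%nat) (fun i => (i < index H)%nat /\ H (gmul (ginv (rep H i)) g)).

Inductive generated (G : group) (P : G -> Prop) : G -> Prop :=
| gen_one : generated P gone
| gen_mul : forall g s, generated P g -> P s -> generated P (gmul g s)
| gen_mulV : forall g s, generated P g -> P s -> generated P (gmul g (ginv s)).

Definition well_balanced (G : group) (f : G -> Z) : Prop :=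
  (exists L : list G, NoDup L /\ (forall s, f s <> 0%Z -> In s L) /\
      fold_right Z.add 0%Z (map f L) = 0%Z) /\
  (forall s, s <> gone -> (f s <= 0)%Z) /\
  (forall s, f s = f (ginv s)) /\
  (forall g, generated (fun s => f s <> 0%Z) g).

(* S_* : edges of C(Gamma,f) at e, labelled (s,k) = k-th edge joining e and s,
   with p(s,k) = s and (s,k)^{-1} = (s^{-1},k). *)
Definition in_Sstar (G : group) (f : G -> Z) (x : G * nat) : Prop :=
  fst x <> gone /\ f (fst x) <> 0%Z /\ (snd x < Z.abs_nat (f (fst x)))%nat.

Definition Ff (G : group) (f : G -> Z) (y : G -> G * nat) : Prop :=
  (forall g, in_Sstar f (y g)) /\
  (forall g, y (gmul g (fst (y g))) <> (ginv (fst (y g)), snd (y g))) /\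
  ~ (exists (gs : nat -> G) (m : nat), (1 <= m)%nat /\ gs m = gs 0%nat /\
        forall i, (i < m)%nat -> gs (S i) = gmul (gs i) (fst (y (gs i)))).

Inductive Rbar := Fin (x : R) | PInf | MInf.

Definition Rbar_le (x y : Rbar) : Prop :=
  match x, y with
  | MInf, _ => True
  | _, PInf => True
  | Fin a, Fin b => (a <= b)%R
  | _, _ => False
  end.

Definition is_sup (P : Rbar -> Prop) (l : Rbar) : Prop :=
  (forall x, P x -> Rbar_le x l) /\ (forall u, (forall x, P x -> Rbar_le x u) -> Rbar_le l u).
Definition is_inf (P : Rbar -> Prop) (l : Rbar) : Prop :=
  (forall x, P x -> Rbar_le l x) /\ (forall u, (forall x, P x -> Rbar_le u x) -> Rbar_le u l).
Definition Rbar_sup (P : Rbar -> Prop) : Rbar := epsilon (inhabits MInf) (is_sup P).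
Definition Rbar_inf (P : Rbar -> Prop) : Rbar := epsilon (inhabits MInf) (is_inf P).
Definition Rbar_limsup (a : nat -> Rbar) : Rbar :=
  Rbar_inf (fun l => exists N, l = Rbar_sup (fun x => exists n, (N <= n)%nat /\ x = a n)).

(* log of a natural number, log 0 = -infinity *)
Definition Rbar_lognat (n : nat) : Rbar :=
  match n with O => MInf | _ => Fin (ln (INR n)) end.
Definition Rbar_scale (c : R) (x : Rbar) : Rbar :=
  match x with Fin a => Fin (c * a) | v => v end.

Section Entropy.
Variables (G : group) (A : Type).

Definition rho (x y : G -> A) : R :=
  if excluded_middle_informative (x gone = y gone) then 0%R else 1%R.

Definition shift (s : G) (y : G -> A) : G -> A := fun t => y (gmul (ginv s) t).

(* maps Gamma/Gamma_n -> X, cosets indexed by 0..index-1 via cidx *)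
Definition in_Map (X : (G -> A) -> Prop) (H : G -> Prop) (W : list G) (delta : R)
    (phi : nat -> G -> A) : Prop :=
  (forall i, (i < index H)%nat -> X (phi i)) /\
  forall s, In s W ->
    (sqrt (/ INR (index H) *
       fold_right Rplus 0%R
         (map (fun i => (rho (phi (cidx H (gmul s (rep H i)))) (shift s (phi i))) ^ 2)
              (seq 0 (index H)))) <= delta)%R.

Definition rho_inf (H : G -> Prop) (phi psi : nat -> G -> A) : R :=
  fold_right Rmax 0%R (map (fun i => rho (phi i) (psi i)) (seq 0 (index H))).

Definition separated (H : G -> Prop) (eps : R) (F : list (nat -> G -> A)) : Prop :=
  forall d i j, (i < length F)%nat -> (j < length F)%nat -> i <> j ->
    (eps <= rho_inf H (nth i F d) (nth j F d))%R.

Definition logN (X : (G -> A) -> Prop) (H : G -> Prop) (eps : R) (W : list G) (delta : R) : Rbar :=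
  Rbar_sup (fun v => exists F : list (nat -> G -> A),
     (forall phi, In phi F -> in_Map X H W delta phi) /\ separated H eps F /\
     v = Rbar_lognat (length F)).

Definition sofic_entropy (Gs : nat -> G -> Prop) (X : (G -> A) -> Prop) : Rbar :=
  Rbar_sup (fun v => exists eps, (0 < eps)%R /\
    v = Rbar_inf (fun u => exists W : list G,
      u = Rbar_inf (fun w => exists delta, (0 < delta)%R /\
        w = Rbar_limsup (fun n =>
              Rbar_scale (/ INR (index (Gs n))) (logN X (Gs n) eps W delta))))).
End Entropy.

Section Tree.
Variables (G : group) (H : G -> Prop) (f : G -> Z).

Definition suppL : list G :=
  epsilon (inhabits []) (fun L => NoDup L /\ forall s, In s L <-> (s <> gone /\ f s <> 0%Z)).

(* half-edge (i,(s,k)) = class of the edge (rep i, (s,k)) of C(Gamma,f), oriented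
   from vertex i to vertex cidx (rep i * s); it is the same edge as its partner. *)
Definition halfedge := (nat * (G * nat))%type.
Definition hsrc (h : halfedge) : nat := fst h.
Definition htgt (h : halfedge) : nat := cidx H (gmul (rep H (fst h)) (fst (snd h))).
Definition partner (h : halfedge) : halfedge := (htgt h, (ginv (fst (snd h)), snd (snd h))).

Definition halfedges : list halfedge :=
  flat_map (fun i => flat_map (fun s => map (fun k => (i, (s, k))) (seq 0 (Z.abs_nat (f s))))
                               suppL) (seq 0 (index H)).

Fixpoint walk (T : list halfedge) (i : nat) (w : list halfedge) (j : nat) : Prop :=
  match w with
  | [] => i = j
  | h :: w' => In h T /\ hsrc h = i /\ walk T (htgt h) w' j
  end.

Definition closed_sel (T : list halfedge) : Prop := forall h, In h T -> In (partner h) T.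

Definition connected_sel (T : list halfedge) : Prop :=
  forall i j, (i < index H)%nat -> (j < index H)%nat -> exists w, walk T i w j.

Definition acyclic_sel (T : list halfedge) : Prop :=
  ~ (exists (v : nat) (c : list halfedge), c <> [] /\ walk T v c v /\
       forall d t u, (t < length c)%nat -> (u < length c)%nat -> t <> u ->
         nth t c d <> nth u c d /\ nth t c d <> partner (nth u c d)).

Definition spanning_tree (T : list halfedge) : Prop :=
  closed_sel T /\ connected_sel T /\ acyclic_sel T.

Fixpoint sublists {B : Type} (l : list B) : list (list B) :=
  match l with
  | [] => [[]]
  | x :: l' => let r := sublists l' in map (cons x) r ++ r
  end.

Definition count_prop {B : Type} (P : B -> Prop) (l : list B) : nat :=
  length (filter (fun x => if excluded_middle_informative (P x) then true else false) l).

Definition tau : nat := count_prop spanning_tree (sublists halfedges).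
End Tree.

From Pilot Require Import Defs.
From Stdlib Require Import Reals List Arith ZArith Lra Lia Classical ClassicalEpsilon.
Import ListNotations.

(* Fix eps, reals c' < c above the limsup, and choose a radius L, the finite
   window W = B_L^{-1} (B_L the ball of radius L of the word metric given by
   the support S of f) and a small delta.  For n large, B_L meets Gamma_n only
   in e.  A map phi in Map(W, delta, Gamma_n) selects, at every vertex v of
   C_n^f, the half-edge sg(v) labelled by the coordinate at e of the point of
   F_f attached to v; this is a functional graph on the N = [Gamma:Gamma_n]
   vertices.  At "good" vertices phi is W-equivariant, so the functional graph
   follows a path of F_f in Gamma and cannot close up in at most L steps; hence
   there are at most N/(L+1) cycles through good vertices, and at most
   |W| delta^2 N bad vertices.  Deleting one selected edge per root (bad vertex
   or cycle representative) leaves a forest, which extends to a spanning tree T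
   by a small set A of edges; together with the set Sr of selected edges at the
   roots, the triple (T, A, Sr) determines sg, i.e. phi at e on every coset.
   So an eps-separated family has at most tau(C_n^f) * M^2 elements, where M
   counts the edge sets of size at most K = O((delta^2 |W| + 1/L) N); a
   binomial estimate makes M <= exp((3/8)(c - c') N) for suitable parameters,
   so that N^{-1} log N_eps(Map(W, delta, Gamma_n)) <= c for all large n. *)

Section ExtendedReals.
Local Open Scope R_scope.

Lemma Rbar_le_PInf x : Rbar_le x PInf.
Proof. destruct x; simpl; auto. Qed.

Lemma Rbar_le_MInf x : Rbar_le MInf x.
Proof. destruct x; simpl; auto. Qed.

Lemma Rbar_le_trans x y z : Rbar_le x y -> Rbar_le y z -> Rbar_le x z.
Proof. destruct x, y, z; simpl; intros; try lra; auto; contradiction. Qed.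

Lemma sup_exists (P : Rbar -> Prop) : exists l, is_sup P l.
Proof.
  destruct (classic (P PInf)) as [HP|HP].
  { exists PInf; split; [intros; apply Rbar_le_PInf|].
    intros u Hu; apply Hu in HP; destruct u; simpl in *; auto. }
  set (E := fun r => P (Fin r)).
  destruct (classic (exists r, E r)) as [[r0 Hr0]|HE].
  - destruct (classic (bound E)) as [Hb|Hb].
    + destruct (completeness E Hb (ex_intro _ r0 Hr0)) as [m [Hm1 Hm2]].
      exists (Fin m); split.
      * intros [a| |] Ha; simpl; auto; try contradiction; apply Hm1; exact Ha.
      * intros [a| |] Hu; simpl; auto.
        -- apply Hm2; intros r Hr; apply (Hu (Fin r) Hr).
        -- apply (Hu (Fin r0) Hr0).
    + exists PInf; split; [intros; apply Rbar_le_PInf|].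
      intros [a| |] Hu; simpl; auto.
      * apply Hb; exists a; intros r Hr; apply (Hu (Fin r) Hr).
      * apply (Hu (Fin r0) Hr0).
  - exists MInf; split.
    + intros [a| |] Ha; simpl; auto. apply HE; exists a; exact Ha.
    + intros; apply Rbar_le_MInf.
Qed.

Lemma inf_exists (P : Rbar -> Prop) : exists l, is_inf P l.
Proof.
  destruct (classic (P MInf)) as [HP|HP].
  { exists MInf; split; [intros; apply Rbar_le_MInf|].
    intros u Hu; apply Hu in HP; destruct u; simpl in *; auto. }
  set (E := fun r => P (Fin (- r))).
  destruct (classic (exists r, E r)) as [[r0 Hr0]|HE].
  - destruct (classic (bound E)) as [Hb|Hb].
    + destruct (completeness E Hb (ex_intro _ r0 Hr0)) as [m [Hm1 Hm2]].
      exists (Fin (- m)); split.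
      * intros [a| |] Ha; simpl; auto; try contradiction.
        assert (Ea : E (- a)) by (unfold E; rewrite Ropp_involutive; exact Ha).
        specialize (Hm1 (- a) Ea). lra.
      * intros [a| |] Hu; simpl; auto.
        -- assert (- a >= m); [|lra].
           apply Rle_ge, Hm2; intros r Hr. specialize (Hu _ Hr); simpl in Hu; lra.
        -- apply (Hu (Fin (- r0)) Hr0).
    + exists MInf; split; [intros; apply Rbar_le_MInf|].
      intros [a| |] Hu; simpl; auto.
      * apply Hb; exists (- a); intros r Hr. specialize (Hu _ Hr); simpl in Hu; lra.
      * apply (Hu (Fin (- r0)) Hr0).
  - exists PInf; split.
    + intros [a| |] Ha; simpl; auto. apply HE; exists (- a).
      unfold E; rewrite Ropp_involutive; exact Ha.
    + intros; apply Rbar_le_PInf.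
Qed.

Lemma sup_le P u : (forall x, P x -> Rbar_le x u) -> Rbar_le (Rbar_sup P) u.
Proof.
  intros h. apply (proj2 (epsilon_spec (inhabits MInf) (is_sup P) (sup_exists P))), h.
Qed.

Lemma le_sup P x : P x -> Rbar_le x (Rbar_sup P).
Proof.
  intros h. apply (proj1 (epsilon_spec (inhabits MInf) (is_sup P) (sup_exists P))), h.
Qed.

Lemma inf_le P x : P x -> Rbar_le (Rbar_inf P) x.
Proof.
  intros h. apply (proj1 (epsilon_spec (inhabits MInf) (is_inf P) (inf_exists P))), h.
Qed.

Lemma le_inf P u : (forall x, P x -> Rbar_le u x) -> Rbar_le u (Rbar_inf P).
Proof.
  intros h. apply (proj2 (epsilon_spec (inhabits MInf) (is_inf P) (inf_exists P))), h.
Qed.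

Definition Rbar_lt (x y : Rbar) : Prop := ~ Rbar_le y x.

Lemma le_of_forall_gt a b :
  (forall c, Rbar_lt b (Fin c) -> Rbar_le a (Fin c)) -> Rbar_le a b.
Proof.
  unfold Rbar_lt; intros H. destruct b as [r| |]; [|apply Rbar_le_PInf|].
  - destruct a as [a| |]; simpl; auto.
    + destruct (Rle_dec a r) as [h|h]; auto.
      assert (Hh := H ((a + r) / 2) ltac:(simpl; lra)). simpl in Hh; lra.
    + apply (H (r + 1)); simpl; lra.
  - destruct a as [a| |]; simpl; auto.
    + assert (Hh := H (a - 1) (fun x => x)). simpl in Hh; lra.
    + exact (H 0 (fun x => x)).
Qed.

Lemma lt_between b c : Rbar_lt b (Fin c) -> exists c', Rbar_lt b (Fin c') /\ c' < c.
Proof.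
  unfold Rbar_lt; intros H. destruct b as [r| |]; simpl in *.
  - exists ((r + c) / 2). split; lra.
  - contradiction.
  - exists (c - 1); split; auto; lra.
Qed.

Lemma limsup_lt_eventually a c :
  Rbar_lt (Rbar_limsup a) (Fin c) -> exists N0, forall n, (N0 <= n)%nat -> Rbar_lt (a n) (Fin c).
Proof.
  intros hlt. apply NNPP; intros hno. apply hlt. apply le_inf.
  intros l [N0 ->]. apply NNPP; intros hl. apply hno. exists N0.
  intros n hn hle. apply hl. eapply Rbar_le_trans; [exact hle|]. apply le_sup. exists n; auto.
Qed.

Lemma limsup_le_eventually a c N0 :
  (forall n, (N0 <= n)%nat -> Rbar_le (a n) (Fin c)) -> Rbar_le (Rbar_limsup a) (Fin c).
Proof.
  intros h. eapply Rbar_le_trans; [apply inf_le; exists N0; reflexivity|].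
  apply sup_le. intros x [n [hn ->]]. apply h, hn.
Qed.

Lemma scale_le k x y : 0 < k -> Rbar_le x (Fin y) -> Rbar_le (Rbar_scale k x) (Fin (k * y)).
Proof. intros hk. destruct x as [r| |]; simpl; auto. intros h. apply Rmult_le_compat_l; lra. Qed.

End ExtendedReals.

Definition asbool {X : Type} (P : X -> Prop) : X -> bool :=
  fun x => if excluded_middle_informative (P x) then true else false.

Lemma asbool_true {X : Type} (P : X -> Prop) x : asbool P x = true <-> P x.
Proof.
  unfold asbool; destruct (excluded_middle_informative (P x)); split; intros; auto; congruence.
Qed.

Lemma count_or {X : Type} (P Q : X -> Prop) (l : list X) :
  (length (filter (asbool (fun x => P x \/ Q x)) l) <=
   length (filter (asbool P) l) + length (filter (asbool Q) l))%nat.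
Proof.
  unfold asbool. induction l as [|x l IH]; simpl; auto.
  destruct (excluded_middle_informative (P x \/ Q x));
  destruct (excluded_middle_informative (P x)); destruct (excluded_middle_informative (Q x));
  simpl; try lia; tauto.
Qed.

Lemma filter_sublists {X : Type} (p : X -> bool) (l : list X) : In (filter p l) (sublists l).
Proof.
  induction l as [|x l IH]; simpl; auto.
  destruct (p x); apply in_or_app; [left; apply in_map; auto | right; auto].
Qed.

Lemma NoDup_flat_map_disj {X Y : Type} (F : X -> list Y) (l : list X) :
  NoDup l -> (forall x, In x l -> NoDup (F x)) ->
  (forall x y z, In x l -> In y l -> x <> y -> In z (F x) -> ~ In z (F y)) ->
  NoDup (flat_map F l).
Proof.
  induction l as [|a l IH]; simpl; intros hn h1 h2; [constructor|].
  inversion hn as [|? ? hna hnl]; subst.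
  apply NoDup_app; auto.
  - apply IH; auto. intros x y z hx hy; apply h2; auto.
  - intros z hz hz'. apply in_flat_map in hz'. destruct hz' as [y [hy hzy]].
    apply (h2 a y z); auto. intro e; subst; contradiction.
Qed.

Lemma length_flat_map_const {X Y : Type} (F : X -> list Y) (l : list X) (D : nat) :
  (forall x, length (F x) = D) -> length (flat_map F l) = (length l * D)%nat.
Proof. intros h. induction l as [|a l IH]; simpl; auto. rewrite length_app, IH, h. lia. Qed.

Lemma pigeonhole (g : nat -> nat) n : (forall i, (i <= n)%nat -> (g i < n)%nat) ->
  exists i j, (i < j)%nat /\ (j <= n)%nat /\ g i = g j.
Proof.
  intros hg. apply NNPP; intros hno.
  assert (hnd : NoDup (map g (seq 0 (S n)))).
  { apply NoDup_map_NoDup_ForallPairs; [|apply seq_NoDup].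
    intros i j hi hj e. apply in_seq in hi, hj.
    destruct (Nat.lt_total i j) as [h|[h|h]]; auto; exfalso; apply hno;
      [exists i, j | exists j, i]; repeat split; auto; lia. }
  assert (hincl : incl (map g (seq 0 (S n))) (seq 0 n)).
  { intros x hx. apply in_map_iff in hx. destruct hx as [i [<- hi]].
    apply in_seq in hi. apply in_seq. specialize (hg i ltac:(lia)). lia. }
  assert (h := NoDup_incl_length hnd hincl). rewrite length_map, !length_seq in h. lia.
Qed.

Lemma argmin (g : nat -> nat) p : (0 < p)%nat ->
  exists s0, (s0 < p)%nat /\ forall s, (s < p)%nat -> (g s0 <= g s)%nat.
Proof.
  induction p as [|p IH]; intros hp; [lia|].
  destruct p as [|p]. { exists 0%nat; split; auto; intros s hs; replace s with 0%nat by lia; auto. }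
  destruct (IH ltac:(lia)) as [s0 [hs0 hm]].
  destruct (le_lt_dec (g s0) (g (S p))) as [h|h]; [exists s0|exists (S p)];
    split; try lia; intros s hs; destruct (Nat.eq_dec s (S p)); subst; auto;
    specialize (hm s ltac:(lia)); lia.
Qed.

Lemma argmax (g : nat -> nat) p : (0 < p)%nat ->
  exists s0, (s0 < p)%nat /\ forall s, (s < p)%nat -> (g s <= g s0)%nat.
Proof.
  induction p as [|p IH]; intros hp; [lia|].
  destruct p as [|p]. { exists 0%nat; split; auto; intros s hs; replace s with 0%nat by lia; auto. }
  destruct (IH ltac:(lia)) as [s0 [hs0 hm]].
  destruct (le_lt_dec (g (S p)) (g s0)) as [h|h]; [exists s0|exists (S p)];
    split; try lia; intros s hs; destruct (Nat.eq_dec s (S p)); subst; auto;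
    specialize (hm s ltac:(lia)); lia.
Qed.

Lemma least_witness (P : nat -> Prop) : (exists t, P t) ->
  exists t, P t /\ forall t', (t' < t)%nat -> ~ P t'.
Proof.
  intros [t ht]. induction t as [t IH] using lt_wf_ind.
  destruct (classic (exists t', (t' < t)%nat /\ P t')) as [[t' [h1 h2]]|hn].
  - apply (IH t' h1 h2).
  - exists t; split; auto. intros t' h1 h2; apply hn; eauto.
Qed.

Section GroupFacts.
Variable G : group.

Lemma inv_unique (x y : G) : gmul x y = gone -> ginv x = y.
Proof.
  intros H. rewrite <- (gmul1r (ginv x)), <- H, gmulA, gmulVl, gmul1l. reflexivity.
Qed.

Lemma ginv_ginv (a : G) : ginv (ginv a) = a.
Proof. apply inv_unique, gmulVl. Qed.

Lemma ginv_one : ginv (@gone G) = gone.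
Proof. apply inv_unique, gmul1l. Qed.

Lemma ginv_mul (a b : G) : ginv (gmul a b) = gmul (ginv b) (ginv a).
Proof. apply inv_unique. rewrite <- gmulA, (gmulA b), gmulVr, gmul1l, gmulVr. reflexivity. Qed.

Lemma mulKV (x y : G) : gmul (ginv x) (gmul x y) = y.
Proof. rewrite gmulA, gmulVl, gmul1l; reflexivity. Qed.

Lemma mulVK (x y : G) : gmul x (gmul (ginv x) y) = y.
Proof. rewrite gmulA, gmulVr, gmul1l; reflexivity. Qed.

Lemma ginv_neq_one (x : G) : x <> gone -> ginv x <> gone.
Proof. intros hx e. apply hx. rewrite <- (ginv_ginv x), e. apply ginv_one. Qed.

End GroupFacts.

Section Cosets.
Variable G : group.
Variable H : G -> Prop.
Hypothesis Hn : normal_subgroup H.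
Hypothesis Hf : finite_index H.

Lemma nsub_mul x y : H x -> H y -> H (gmul x y). Proof. apply Hn. Qed.
Lemma nsub_inv x : H x -> H (ginv x). Proof. apply Hn. Qed.
Lemma nsub_conj g x : H x -> H (gmul (gmul g x) (ginv g)). Proof. apply Hn. Qed.

Definition coset_eq (a b : G) : Prop := H (gmul (ginv a) b).

Lemma coset_eq_sym a b : coset_eq a b -> coset_eq b a.
Proof. unfold coset_eq; intros h. apply nsub_inv in h. rewrite ginv_mul, ginv_ginv in h. exact h. Qed.

Lemma coset_eq_trans a b c : coset_eq a b -> coset_eq b c -> coset_eq a c.
Proof.
  unfold coset_eq; intros h1 h2. assert (h := nsub_mul _ _ h1 h2).
  rewrite <- gmulA, mulVK in h. exact h.
Qed.

Lemma coset_eq_mull c a b : coset_eq a b -> coset_eq (gmul c a) (gmul c b).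
Proof. unfold coset_eq; intros h. rewrite ginv_mul, <- gmulA, mulKV. exact h. Qed.

(* Normality makes the coset relation compatible with right multiplication ... *)
Lemma coset_eq_mulr c a b : coset_eq a b -> coset_eq (gmul a c) (gmul b c).
Proof.
  unfold coset_eq; intros h. apply (nsub_conj (ginv c)) in h. rewrite ginv_ginv in h.
  rewrite ginv_mul. rewrite <- !gmulA in h. rewrite <- !gmulA. exact h.
Qed.

Lemma coset_eq_inv a b : coset_eq a b -> coset_eq (ginv a) (ginv b).
Proof.
  unfold coset_eq; intros h. apply (nsub_conj a) in h. rewrite ginv_ginv.
  rewrite mulVK in h. apply nsub_inv in h. rewrite ginv_mul, ginv_ginv in h. exact h.
Qed.

Lemma reps_spec : transversal H (reps H).
Proof. unfold reps. apply epsilon_spec. exact Hf. Qed.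

Lemma index_pos : (0 < index H)%nat.
Proof.
  destruct reps_spec as [h1 _]. destruct (h1 gone) as [r [hr _]].
  unfold index. destruct (reps H); [inversion hr | simpl; lia].
Qed.

Lemma cidx_spec g : (cidx H g < index H)%nat /\ coset_eq (rep H (cidx H g)) g.
Proof.
  unfold cidx. apply epsilon_spec.
  destruct reps_spec as [h1 _]. destruct (h1 g) as [r [hr hg]].
  destruct (In_nth _ _ gone hr) as [i [hi <-]]. exists i. split; auto.
Qed.

Lemma cidx_lt g : (cidx H g < index H)%nat. Proof. apply cidx_spec. Qed.

Lemma rep_coset_inj i j : (i < index H)%nat -> (j < index H)%nat ->
  coset_eq (rep H i) (rep H j) -> i = j.
Proof.
  intros hi hj h. destruct reps_spec as [_ [hnd h3]].
  apply (proj1 (NoDup_nth (reps H) gone) hnd); auto.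
  apply h3; auto; apply nth_In; auto.
Qed.

Lemma cidx_eq a b : coset_eq a b -> cidx H a = cidx H b.
Proof.
  intros h. destruct (cidx_spec a) as [ha1 ha2]. destruct (cidx_spec b) as [hb1 hb2].
  apply rep_coset_inj; auto. eapply coset_eq_trans; [exact ha2|].
  eapply coset_eq_trans; [exact h|]. apply coset_eq_sym; exact hb2.
Qed.

Lemma cidx_eq_inv a b : cidx H a = cidx H b -> coset_eq a b.
Proof.
  intros e. destruct (cidx_spec a) as [_ ha]. destruct (cidx_spec b) as [_ hb].
  rewrite e in ha. eapply coset_eq_trans; [apply coset_eq_sym; exact ha| exact hb].
Qed.

Lemma cidx_rep i : (i < index H)%nat -> cidx H (rep H i) = i.
Proof. intros hi. destruct (cidx_spec (rep H i)) as [h1 h2]. apply rep_coset_inj; auto. Qed.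

Lemma cidx_mulr a b : cidx H (gmul (rep H (cidx H b)) a) = cidx H (gmul b a).
Proof. apply cidx_eq, coset_eq_mulr, cidx_spec. Qed.

Lemma cidx_mull a b : cidx H (gmul a (rep H (cidx H b))) = cidx H (gmul a b).
Proof. apply cidx_eq, coset_eq_mull, cidx_spec. Qed.

Lemma cidx_invc b : cidx H (ginv (rep H (cidx H b))) = cidx H (ginv b).
Proof. apply cidx_eq, coset_eq_inv, cidx_spec. Qed.

(* Vertices of C_n^f (cosets Gamma_n g, numbered v) correspond to the points
   iota v of Gamma/Gamma_n on which maps phi are defined. *)
Definition iota (v : nat) : nat := cidx H (ginv (rep H v)).

Lemma iota_lt v : (iota v < index H)%nat. Proof. apply cidx_lt. Qed.

Lemma iota_iota v : (v < index H)%nat -> iota (iota v) = v.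
Proof. intros hv. unfold iota. rewrite cidx_invc, ginv_ginv, cidx_rep; auto. Qed.

Lemma iota_step v s :
  iota (cidx H (gmul (rep H v) s)) = cidx H (gmul (ginv s) (rep H (iota v))).
Proof. unfold iota. rewrite cidx_invc, cidx_mull, ginv_mul. reflexivity. Qed.

End Cosets.

Section HalfEdgeGraph.
Variable G : group.
Variable H : G -> Prop.
Variable f : G -> Z.
Notation N := (index H).
Notation hs := (halfedges H f).
Notation hE := (halfedge G).
Notation tgt := (htgt H).
Notation prt := (partner H).

Hypothesis Hnd : NoDup hs.
Hypothesis Hsrc : forall h, In h hs -> (hsrc h < N)%nat.
Hypothesis Htgt : forall h, In h hs -> (tgt h < N)%nat.
Hypothesis Hpin : forall h, In h hs -> In (prt h) hs.
Hypothesis Hptgt : forall h, In h hs -> tgt (prt h) = hsrc h.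
Hypothesis Hpp : forall h, In h hs -> prt (prt h) = h.
Hypothesis Hconn : forall i j, (i < N)%nat -> (j < N)%nat -> exists w, walk H hs i w j.
Hypothesis HN : (0 < N)%nat.

Lemma walk_app T a w1 b w2 c :
  walk H T a w1 b -> walk H T b w2 c -> walk H T a (w1 ++ w2) c.
Proof.
  revert a; induction w1 as [|x w1 IH]; simpl; intros a h1 h2.
  - subst; auto.
  - destruct h1 as [? [? ?]]; repeat split; auto; eapply IH; eauto.
Qed.

Lemma walk_mono T T' a w b :
  (forall h, In h w -> In h T -> In h T') -> walk H T a w b -> walk H T' a w b.
Proof.
  revert a; induction w as [|x w IH]; simpl; intros a hi h; auto.
  destruct h as [? [? ?]]; repeat split; auto.
Qed.

Lemma walk_edges_in T a w b h : walk H T a w b -> In h w -> In h T.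
Proof.
  revert a; induction w as [|x w IH]; simpl; intros a hw hi; [contradiction|].
  destruct hw as [? [? ?]]. destruct hi; subst; eauto.
Qed.

Lemma walk_rev T a w b : (forall h, In h T -> In h hs) -> (forall h, In h T -> In (prt h) T) ->
  walk H T a w b -> exists w', walk H T b w' a.
Proof.
  intros hT hc. revert a; induction w as [|x w IH]; simpl; intros a hw.
  - subst; exists []; simpl; auto.
  - destruct hw as [hx [hsx hw]]. destruct (IH _ hw) as [w' hw'].
    exists (w' ++ [prt x]). eapply walk_app; [exact hw'|]. simpl.
    repeat split; auto. rewrite Hptgt; auto.
Qed.

Lemma walk_label_const (rt : nat -> nat) T a w b :
  (forall h, In h w -> rt (hsrc h) = rt (tgt h)) -> walk H T a w b -> rt a = rt b.
Proof.
  revert a; induction w as [|x w IH]; simpl; intros a hp hw; [subst; auto|].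
  destruct hw as [_ [<- hw]]. rewrite hp by auto. apply (IH _); auto.
Qed.

Lemma walk_label_change (rt : nat -> nat) T a w b : walk H T a w b -> rt a <> rt b ->
  exists h, In h w /\ rt (hsrc h) <> rt (tgt h).
Proof.
  intros hw hn. apply NNPP; intro hc. apply hn. eapply walk_label_const; [|exact hw].
  intros h hi. apply NNPP; intro hne. apply hc; eauto.
Qed.

Lemma walk_label_except (rt : nat -> nat) T a c b d t : walk H T a c b -> (t < length c)%nat ->
  (forall u, (u < length c)%nat -> u <> t -> rt (hsrc (nth u c d)) = rt (tgt (nth u c d))) ->
  rt a = rt (hsrc (nth t c d)) /\ rt (tgt (nth t c d)) = rt b.
Proof.
  revert a t; induction c as [|x c IH]; simpl; intros a t hw ht hu; [lia|].
  destruct hw as [hx [hsx hw]]. destruct t as [|t].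
  - subst a; split; auto. eapply walk_label_const; [|exact hw].
    intros h hi. destruct (In_nth _ _ d hi) as [u [hu1 <-]].
    apply (hu (S u)); simpl; lia.
  - assert (e0 : rt a = rt (tgt x)) by (subst a; apply (hu 0%nat); simpl; lia).
    destruct (IH (tgt x) t hw ltac:(lia)) as [h1 h2].
    + intros u hu1 hu2. apply (hu (S u)); simpl; lia.
    + split; congruence.
Qed.

Lemma walk_nth T a c b d : walk H T a c b ->
  (c <> [] -> hsrc (nth 0 c d) = a) /\
  (forall t, (S t < length c)%nat -> tgt (nth t c d) = hsrc (nth (S t) c d)) /\
  (c <> [] -> tgt (nth (length c - 1) c d) = b).
Proof.
  revert a; induction c as [|x c IH]; intros a hw.
  - split; [|split]; intros; [congruence|simpl in *; lia|congruence].
  - destruct hw as [hx [hsx hw]]. destruct (IH _ hw) as [i1 [i2 i3]].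
    split; [|split].
    + intros; simpl; auto.
    + intros t ht. destruct t as [|t].
      * simpl. destruct c as [|y c]; [simpl in ht; lia|]. symmetry; apply i1; congruence.
      * simpl. apply i2. simpl in ht; lia.
    + intros _. destruct c as [|y c]; [exact hw|].
      replace (length (x :: y :: c) - 1)%nat with (S (length (y :: c) - 1)) by (simpl; lia).
      apply i3. congruence.
Qed.

Lemma spanning_tree_ext T T' :
  (forall h, In h T <-> In h T') -> spanning_tree H T -> spanning_tree H T'.
Proof.
  intros he [hc [hco ha]]. split; [|split].
  - intros h hh. apply he, hc, he, hh.
  - intros i j hi hj. destruct (hco i j hi hj) as [w hw]. exists w.
    eapply walk_mono; [|exact hw]. intros; apply he; auto.
  - intros [v [c [hne [hw hd]]]]. apply ha. exists v, c. split; [exact hne|split; [|exact hd]].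
    eapply walk_mono; [|exact hw]. intros; apply he; auto.
Qed.

(* A forest E with roots R: E is a partner-closed acyclic set of half-edges,
   every vertex v is joined inside E to its root rt v in R, and rt is
   constant along the edges of E (so it labels the components). *)
Definition forest (E : list hE) (R : list nat) (rt : nat -> nat) : Prop :=
  (forall h, In h E -> In h hs) /\
  (forall h, In h E -> In (prt h) E) /\
  (forall v, (v < N)%nat -> In (rt v) R) /\
  (forall v, (v < N)%nat -> exists w, walk H E v w (rt v)) /\
  (forall h, In h E -> rt (hsrc h) = rt (tgt h)) /\
  (forall r, In r R -> rt r = r /\ (r < N)%nat) /\
  acyclic_sel H E.

(* Adding an edge between two components keeps the edge set acyclic: a cycle
   through the new edge would have to return between the two components. *)
Lemma acyclic_add_bridge (E : list hE) (rt : nat -> nat) (h : hE) :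
  (forall x, In x E -> rt (hsrc x) = rt (tgt x)) -> acyclic_sel H E ->
  In h hs -> rt (hsrc h) <> rt (tgt h) -> acyclic_sel H (h :: prt h :: E).
Proof.
  intros hE ha hh hne [v [c [hc [hw hd]]]].
  destruct (classic (exists t, (t < length c)%nat /\ (nth t c h = h \/ nth t c h = prt h)))
    as [[t [ht hth]]|hno].
  - assert (hu : forall u, (u < length c)%nat -> u <> t ->
                 rt (hsrc (nth u c h)) = rt (tgt (nth u c h))).
    { intros u hu hut. apply hE. destruct (hd h u t hu ht hut) as [d1 d2].
      assert (hin := walk_edges_in _ _ _ _ _ hw (nth_In c h hu)). simpl in hin.
      destruct hin as [e|[e|e]]; auto; exfalso;
        destruct hth as [e'|e']; rewrite e' in *; try congruence.
      rewrite Hpp in d2; auto. }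
    destruct (walk_label_except rt _ _ _ _ h t hw ht hu) as [e1 e2].
    destruct hth as [e|e]; rewrite e in *; [congruence|].
    change (hsrc (prt h)) with (tgt h) in e1. rewrite Hptgt in e2; auto. congruence.
  - apply ha. exists v, c. split; [exact hc|split; [|exact hd]].
    eapply walk_mono; [|exact hw]. intros x hx hin. simpl in hin.
    destruct (In_nth _ _ h hx) as [t [ht e]].
    destruct hin as [e'|[e'|e']]; auto; exfalso; apply hno; exists t; split; auto;
      [left|right]; congruence.
Qed.

Lemma forest_one_root E R rt :
  forest E R rt -> (forall r r', In r R -> In r' R -> r = r') -> spanning_tree H E.
Proof.
  intros [i1 [i2 [i3 [i4 [_ [_ i7]]]]]] hR. split; [exact i2|split; [|exact i7]].
  intros i j hi hj.
  destruct (i4 i hi) as [w1 hw1]. destruct (i4 j hj) as [w2 hw2].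
  destruct (walk_rev _ _ _ _ i1 i2 hw2) as [w3 hw3].
  exists (w1 ++ w3). eapply walk_app; [exact hw1|].
  rewrite (hR (rt i) (rt j)); auto.
Qed.

Lemma forest_bridge_exists E R rt r1 r2 : forest E R rt -> In r1 R -> In r2 R -> r1 <> r2 ->
  exists h, In h hs /\ rt (hsrc h) <> rt (tgt h).
Proof.
  intros [_ [_ [_ [_ [_ [i6 _]]]]]] hr1 hr2 hne.
  destruct (i6 r1 hr1) as [e1 hr1N]. destruct (i6 r2 hr2) as [e2 hr2N].
  destruct (Hconn _ _ hr1N hr2N) as [w hw].
  destruct (walk_label_change rt _ _ _ _ hw ltac:(congruence)) as [h [hin hch]].
  exists h. split; [eapply walk_edges_in; eauto|exact hch].
Qed.

(* After adding a bridge h, the component of b is relabelled a. *)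
Definition relabel (rt : nat -> nat) (b a x : nat) : nat := if Nat.eq_dec (rt x) b then a else rt x.

(* Each vertex of the merged component reaches the new root rt (hsrc h):
   v ~> b ~> tgt h, then back along prt h to hsrc h ~> rt (hsrc h). *)
Lemma bridge_walk_to_root E R rt h : forest E R rt -> In h hs -> forall v, (v < N)%nat ->
  exists w, walk H (h :: prt h :: E) v w (relabel rt (rt (tgt h)) (rt (hsrc h)) v).
Proof.
  intros [i1 [i2 [_ [i4 _]]]] hh v hv.
  assert (hsub : forall x y w', walk H E x w' y -> walk H (h :: prt h :: E) x w' y).
  { intros x y w' hw'. eapply walk_mono; [|exact hw']. simpl; auto. }
  destruct (i4 v hv) as [w1 hw1]. unfold relabel.
  destruct (Nat.eq_dec (rt v) (rt (tgt h))) as [e|e]; [|exists w1; apply hsub, hw1].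
  destruct (i4 (tgt h) (Htgt h hh)) as [w2 hw2].
  destruct (walk_rev _ _ _ _ i1 i2 hw2) as [w3 hw3].
  destruct (i4 (hsrc h) (Hsrc h hh)) as [w4 hw4].
  exists (w1 ++ w3 ++ prt h :: w4).
  eapply walk_app; [apply hsub; exact hw1|]. rewrite e.
  eapply walk_app; [apply hsub; exact hw3|]. simpl.
  split; [simpl; auto|]. split; [reflexivity|]. rewrite Hptgt by exact hh. apply hsub, hw4.
Qed.

Lemma forest_add_bridge E R rt h : forest E R rt -> In h hs -> rt (hsrc h) <> rt (tgt h) ->
  ~ In h E /\ ~ In (prt h) E /\ (length (remove Nat.eq_dec (rt (tgt h)) R) < length R)%nat /\
  forest (h :: prt h :: E) (remove Nat.eq_dec (rt (tgt h)) R) (relabel rt (rt (tgt h)) (rt (hsrc h))).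
Proof.
  intros hF hh hch. pose proof hF as [i1 [i2 [i3 [i4 [i5 [i6 i7]]]]]].
  set (a := rt (hsrc h)) in *. set (b := rt (tgt h)) in *.
  assert (hnotE : ~ In h E) by (intro hx; apply hch, i5, hx).
  split; [exact hnotE|]. split.
  { intro hx; apply hnotE; rewrite <- (Hpp h hh); apply i2, hx. }
  split; [apply remove_length_lt, i3, Htgt, hh|].
  split; [|split; [|split; [|split; [|split; [|split]]]]].
  - intros x [e|[e|e]]; subst; auto.
  - intros x [e|[e|e]]; subst; simpl; auto. rewrite Hpp; auto.
  - intros v hv. unfold relabel. apply in_in_remove.
    + destruct (Nat.eq_dec (rt v) b); auto.
    + destruct (Nat.eq_dec (rt v) b); auto. apply i3, Hsrc, hh.
  - apply (bridge_walk_to_root E R); auto.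
  - intros x [ex|[ex|ex]]; [subst x|subst x|]; unfold relabel.
    + fold a b. destruct (Nat.eq_dec a b); destruct (Nat.eq_dec b b); congruence.
    + change (hsrc (prt h)) with (tgt h). rewrite Hptgt; auto. fold a b.
      destruct (Nat.eq_dec a b); destruct (Nat.eq_dec b b); congruence.
    + rewrite (i5 x ex). reflexivity.
  - intros r hr. apply in_remove in hr. destruct hr as [hr hrb].
    destruct (i6 r hr) as [er hrN]. unfold relabel. rewrite er.
    destruct (Nat.eq_dec r b); [congruence|]. auto.
  - apply (acyclic_add_bridge E rt); auto.
Qed.

Lemma forest_extend n : forall E R rt, (length R <= n)%nat -> forest E R rt ->
  exists Ef Aadd, spanning_tree H Ef /\
    (forall x, In x Ef <-> In x E \/ exists y, In y Aadd /\ (x = y \/ x = prt y)) /\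
    (forall x, In x E -> ~ In x Aadd /\ ~ In (prt x) Aadd) /\
    (forall y, In y Aadd -> In y hs) /\
    (length Aadd < length R)%nat.
Proof.
  induction n as [|n IH]; intros E R rt hl hF.
  { destruct hF as [_ [_ [i3 _]]]. specialize (i3 0%nat HN).
    destruct R; simpl in *; [contradiction|lia]. }
  destruct (classic (exists r1 r2, In r1 R /\ In r2 R /\ r1 <> r2)) as [[r1 [r2 [h1 [h2 h12]]]]|hone].
  - destruct (forest_bridge_exists E R rt r1 r2 hF h1 h2 h12) as [h [hh hch]].
    destruct (forest_add_bridge E R rt h hF hh hch) as [hnE [hnpE [hlR hF']]].
    assert (hlR' : (length (remove Nat.eq_dec (rt (tgt h)) R) <= n)%nat) by lia.
    destruct (IH _ _ _ hlR' hF') as [Ef [Aadd [hsp [hmem [hdisj [hA hlA]]]]]].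
    exists Ef, (h :: Aadd). split; [exact hsp|]. split; [|split; [|split]].
    + intros x. rewrite hmem. simpl. split.
      * intros [[e|[e|e]]|[y [hy e]]]; auto; right.
        -- exists h; auto.
        -- exists h; auto.
        -- exists y; auto.
      * intros [e|[y [[e|hy] e']]]; [auto| |].
        -- subst y. destruct e'; auto.
        -- right; exists y; auto.
    + intros x hx. simpl. destruct (hdisj x ltac:(simpl; auto)) as [d1 d2]. split.
      * intros [e|e]; [subst; contradiction|auto].
      * intros [e|e]; [|auto]. apply hnpE. rewrite e, Hpp; auto. apply hF, hx.
    + intros y [e|e]; subst; auto.
    + simpl; lia.
  - exists E, []. split.
    + apply (forest_one_root E R rt hF). intros r r' hr hr'.
      apply NNPP; intro hne; apply hone; eauto.
    + destruct hF as [_ [_ [i3 _]]]. specialize (i3 0%nat HN).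
      split; [|split; [|split]]; simpl; try tauto.
      * intros x; split; auto. intros [e|[y [[] _]]]; auto.
      * destruct R; simpl in *; [contradiction|lia].
Qed.

Definition selection (sg : nat -> hE) : Prop :=
  forall v, (v < N)%nat -> In (sg v) hs /\ hsrc (sg v) = v.

Definition sel_next (sg : nat -> hE) (v : nat) : nat := tgt (sg v).
Definition sel_iter (sg : nat -> hE) (v t : nat) : nat := Nat.iter t (sel_next sg) v.

Lemma sel_iter_add sg v a b : sel_iter sg v (a + b) = sel_iter sg (sel_iter sg v a) b.
Proof.
  induction b as [|b IH]; [rewrite Nat.add_0_r; reflexivity|].
  rewrite Nat.add_succ_r. change (sel_next sg (sel_iter sg v (a + b)) =
    sel_next sg (sel_iter sg (sel_iter sg v a) b)). rewrite IH. reflexivity.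
Qed.

Lemma sel_iter_S sg v t : sel_iter sg v (S t) = sel_iter sg (sel_next sg v) t.
Proof. exact (sel_iter_add sg v 1 t). Qed.

Lemma sel_iter_lt sg v t : selection sg -> (v < N)%nat -> (sel_iter sg v t < N)%nat.
Proof. intros hs1 hv. induction t as [|t IH]; auto. apply Htgt, hs1, IH. Qed.

Definition encodes (sg : nat -> hE) (T A Sr : list hE) : Prop :=
  exists isroot : nat -> Prop,
  (forall h, In h Sr <-> (In h hs /\ isroot (hsrc h) /\ h = sg (hsrc h))) /\
  (forall h, (In h T /\ ~ In h A /\ ~ In (prt h) A) <->
             (exists v, (v < N)%nat /\ ~ isroot v /\ (h = sg v \/ h = prt (sg v)))) /\
  (forall v, (v < N)%nat -> exists t, isroot (sel_iter sg v t)) /\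
  (forall v w, (v < N)%nat -> (w < N)%nat -> ~ isroot v -> ~ isroot w -> sg w <> prt (sg v)).

(* If sg and sg' differed
   at v, following sg from v would stay forever among vertices that are
   non-roots for both encodings where sg and sg' differ, never reaching a root. *)
Lemma encodes_unique sg sg' T A Sr : selection sg -> selection sg' ->
  encodes sg T A Sr -> encodes sg' T A Sr -> forall v, (v < N)%nat -> sg v = sg' v.
Proof.
  intros hs1 hs2 [isr [r1 [r2 [r3 r4]]]] [isr' [r1' [r2' [r3' r4']]]].
  assert (at_root : forall v, (v < N)%nat -> isr v -> isr' v /\ sg v = sg' v).
  { intros v hv hi. destruct (hs1 v hv) as [hin hsv].
    assert (hS : In (sg v) Sr) by (apply r1; rewrite hsv; auto).
    apply r1' in hS. rewrite hsv in hS. tauto. }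
  intros v hv. apply NNPP; intro hne.
  assert (key : forall t, (sel_iter sg v t < N)%nat /\ ~ isr (sel_iter sg v t) /\
                          sg (sel_iter sg v t) <> sg' (sel_iter sg v t)).
  { induction t as [|t [hx1 [hx2 hx3]]].
    - split; auto. split; auto. intro hi. apply hne, (at_root v hv hi).
    - set (x := sel_iter sg v t) in *.
      destruct (hs1 x hx1) as [hin1 h1].
      assert (hF : In (sg x) T /\ ~ In (sg x) A /\ ~ In (prt (sg x)) A)
        by (apply r2; exists x; auto).
      apply r2' in hF. destruct hF as [u [hu [hnu [e|e]]]];
        destruct (hs2 u hu) as [hin2 h2].
      + exfalso. assert (u = x) by congruence. subst u. auto.
      + assert (ew : sel_iter sg v (S t) = u).
        { change (tgt (sg x) = u). rewrite e, Hptgt; auto. }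
        rewrite ew. split; auto. split; [intro hi; apply hnu, (at_root u hu hi)|].
        intro es. apply (r4 x u hx1 hu hx2); [intro hi; apply hnu, (at_root u hu hi)|].
        rewrite es, e, Hpp; auto. }
  destruct (r3 v hv) as [t ht]. apply (proj1 (proj2 (key t))), ht.
Qed.

Section ShortCycles.
Variable sg : nat -> hE.
Hypothesis Hsg : selection sg.
Variable good : nat -> Prop.
Variable L : nat.
Hypothesis HL : (2 <= L)%nat.
Hypothesis Hret : forall v, (v < N)%nat -> good v ->
  forall p, (1 <= p)%nat -> (p <= L)%nat -> sel_iter sg v p <> v.

Notation itv := (sel_iter sg).

Definition cycle_min (v : nat) : Prop :=
  good v /\ exists p, (1 <= p)%nat /\ (p <= N)%nat /\ itv v p = v /\
    forall t, (t < p)%nat -> good (itv v t) /\ (v <= itv v t)%nat.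

Definition isroot (v : nat) : Prop := ~ good v \/ cycle_min v.

Lemma sel_iter_mod x p s : (1 <= p)%nat -> itv x p = x -> itv x s = itv x (s mod p).
Proof.
  intros h1 hp. assert (hper : forall q, itv x (q * p) = x).
  { induction q as [|q IH]; [reflexivity|]. simpl. rewrite sel_iter_add, hp. exact IH. }
  rewrite (Nat.div_mod_eq s p) at 1. rewrite Nat.mul_comm, sel_iter_add, hper. reflexivity.
Qed.

(* Every orbit reaches a root: either it meets a bad vertex, or it enters a
   good cycle, whose least vertex is a root. *)
Lemma reach_root v : (v < N)%nat -> exists t, isroot (itv v t).
Proof.
  intros hv. destruct (pigeonhole (itv v) N) as [i [j [hij [hjN he]]]].
  { intros; apply sel_iter_lt; auto. }
  destruct (classic (exists t, (t <= j)%nat /\ ~ good (itv v t))) as [[t [_ ht]]|hg].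
  { exists t; left; auto. }
  assert (hg' : forall t, (t <= j)%nat -> good (itv v t)).
  { intros t ht; apply NNPP; intro; apply hg; eauto. }
  set (x := itv v i). set (p := (j - i)%nat).
  assert (hxp : itv x p = x).
  { unfold x, p. rewrite <- sel_iter_add. replace (i + (j - i))%nat with j by lia. auto. }
  destruct (argmin (itv x) p ltac:(unfold p; lia)) as [s0 [hs0 hm]].
  exists (i + s0)%nat. right. rewrite sel_iter_add. fold x. split.
  { unfold x; rewrite <- sel_iter_add; apply hg'; unfold p in hs0; lia. }
  exists p. split; [unfold p; lia|]. split; [unfold p; lia|]. split.
  - rewrite <- sel_iter_add, Nat.add_comm, sel_iter_add, hxp. reflexivity.
  - intros t ht. rewrite <- sel_iter_add, (sel_iter_mod x p) by (auto; unfold p; lia).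
    assert (hr : ((s0 + t) mod p < p)%nat) by (apply Nat.mod_upper_bound; unfold p; lia).
    split; [|apply hm; auto].
    unfold x; rewrite <- sel_iter_add; apply hg'; unfold p in *; lia.
Qed.

Lemma cycle_min_le v w t t' : (v < N)%nat -> (w < N)%nat -> cycle_min v -> cycle_min w ->
  itv v t = itv w t' -> (v <= w)%nat.
Proof.
  intros hv hw [_ [pv [hpv1 [_ [hpv hall]]]]] [_ [pw [hpw1 [_ [hpw _]]]]] e.
  assert (ew : w = itv v (t + (pw * t' - t'))).
  { rewrite sel_iter_add, e, <- sel_iter_add.
    replace (t' + (pw * t' - t'))%nat with (t' * pw)%nat by nia.
    rewrite (sel_iter_mod w pw) by auto. rewrite Nat.Div0.mod_mul. reflexivity. }
  rewrite ew, (sel_iter_mod v pv) by auto. apply hall, Nat.mod_upper_bound; lia.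
Qed.

(* The first L+1 points of the cycles through the cycle minima are pairwise
   distinct, since good cycles are longer than L. *)
Lemma cycle_points_inj v w t t' : (v < N)%nat -> (w < N)%nat -> cycle_min v -> cycle_min w ->
  (t <= L)%nat -> (t' <= L)%nat -> itv v t = itv w t' -> v = w /\ t = t'.
Proof.
  intros hv hw cv cw ht ht' e.
  assert (vw : v = w).
  { assert (h1 := cycle_min_le v w t t' hv hw cv cw e).
    assert (h2 := cycle_min_le w v t' t hw hv cw cv (eq_sym e)). lia. }
  subst w. split; auto.
  assert (no_repeat : forall a b, (a < b)%nat -> (b <= L)%nat -> itv v a = itv v b -> False).
  { intros a b hab hb eab. destruct cv as [hg [p [hp1 [hpN [hp hall]]]]].
    set (x := itv v a).
    assert (hx : itv x (b - a) = x).
    { unfold x; rewrite <- sel_iter_add. replace (a + (b - a))%nat with b by lia. auto. }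
    assert (hxg : good x).
    { destruct (Nat.lt_ge_cases a p) as [hap|hap]; [apply (hall a hap)|].
      unfold x. rewrite (sel_iter_mod v p) by auto. apply hall, Nat.mod_upper_bound; lia. }
    refine (Hret x _ hxg (b - a) _ _ hx); [apply sel_iter_lt; auto|lia|lia]. }
  destruct (Nat.lt_total t t') as [h|[h|h]]; auto; exfalso;
    [apply (no_repeat t t') | apply (no_repeat t' t)]; auto.
Qed.

Definition cycle_mins : list nat := filter (asbool cycle_min) (seq 0 N).

(* Counting the disjoint initial arcs of length L+1: there are at most N/(L+1) good cycles. *)
Lemma cycle_count : (S L * length cycle_mins <= N)%nat.
Proof.
  set (P := flat_map (fun v => map (fun t => itv v t) (seq 0 (S L))) cycle_mins).
  assert (hlen : length P = (length cycle_mins * S L)%nat).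
  { apply length_flat_map_const. intros v. rewrite length_map, length_seq. reflexivity. }
  assert (hcl : forall v, In v cycle_mins -> (v < N)%nat /\ cycle_min v).
  { intros v hv. apply filter_In in hv. destruct hv as [h1 h2].
    apply in_seq in h1. apply (asbool_true cycle_min) in h2. split; [lia|exact h2]. }
  assert (hnd : NoDup P).
  { apply NoDup_flat_map_disj.
    - apply NoDup_filter, seq_NoDup.
    - intros v hv. destruct (hcl v hv) as [hvN cv].
      apply NoDup_map_NoDup_ForallPairs; [|apply seq_NoDup].
      intros t t' ht ht' e. apply in_seq in ht, ht'.
      apply (cycle_points_inj v v t t'); auto; lia.
    - intros v w z hv hw hne hz hz'.
      apply in_map_iff in hz, hz'. destruct hz as [t [e1 ht]]. destruct hz' as [t' [e2 ht']].
      apply in_seq in ht, ht'. destruct (hcl v hv), (hcl w hw).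
      apply hne. apply (cycle_points_inj v w t t'); auto; try lia; congruence. }
  assert (hinc : incl P (seq 0 N)).
  { intros z hz. apply in_flat_map in hz. destruct hz as [v [hv hz]].
    apply in_map_iff in hz. destruct hz as [t [<- _]]. apply in_seq.
    destruct (hcl v hv). assert (h := sel_iter_lt sg v t Hsg ltac:(auto)). lia. }
  assert (h := NoDup_incl_length hnd hinc). rewrite length_seq in h. lia.
Qed.

Definition first_root v t := isroot (itv v t) /\ forall t', (t' < t)%nat -> ~ isroot (itv v t').
Definition depth v : nat := epsilon (inhabits 0%nat) (first_root v).
Definition root_of v : nat := itv v (depth v).

Lemma depth_spec v : (v < N)%nat -> first_root v (depth v).
Proof. intros hv. unfold depth. apply epsilon_spec, least_witness, reach_root, hv. Qed.

Lemma first_root_unique v t1 t2 : first_root v t1 -> first_root v t2 -> t1 = t2.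
Proof.
  intros [a1 b1] [a2 b2]. destruct (Nat.lt_total t1 t2) as [h|[h|h]]; auto; exfalso.
  - apply (b2 t1 h a1).
  - apply (b1 t2 h a2).
Qed.

Lemma sel_next_lt v : (v < N)%nat -> (sel_next sg v < N)%nat.
Proof. intros hv. apply Htgt, Hsg, hv. Qed.

Lemma depth_root v : (v < N)%nat -> isroot v -> depth v = 0%nat.
Proof.
  intros hv hr. apply (first_root_unique v); [apply depth_spec; auto|]. split; [exact hr|intros; lia].
Qed.

Lemma depth_step v : (v < N)%nat -> ~ isroot v -> depth v = S (depth (sel_next sg v)).
Proof.
  intros hv hr. apply (first_root_unique v); [apply depth_spec; auto|].
  destruct (depth_spec (sel_next sg v) (sel_next_lt v hv)) as [a b]. split.
  - rewrite sel_iter_S. exact a.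
  - intros [|t'] ht'; [exact hr|]. rewrite sel_iter_S. apply b; lia.
Qed.

Lemma root_of_root v : (v < N)%nat -> isroot v -> root_of v = v.
Proof. intros hv hr. unfold root_of. rewrite depth_root; auto. Qed.

Lemma root_of_step v : (v < N)%nat -> ~ isroot v -> root_of v = root_of (sel_next sg v).
Proof. intros hv hr. unfold root_of. rewrite depth_step, sel_iter_S; auto. Qed.

Lemma root_of_spec v : (v < N)%nat -> isroot (root_of v) /\ (root_of v < N)%nat.
Proof. intros hv. split; [apply depth_spec; auto|apply sel_iter_lt; auto]. Qed.

Definition sel_forest : list hE :=
  flat_map (fun v => if asbool isroot v then [] else [sg v; prt (sg v)]) (seq 0 N).
Definition sel_roots : list nat := filter (asbool isroot) (seq 0 N).

Lemma in_sel_forest h : In h sel_forest <->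
  exists v, (v < N)%nat /\ ~ isroot v /\ (h = sg v \/ h = prt (sg v)).
Proof.
  unfold sel_forest. rewrite in_flat_map. split.
  - intros [v [hv hh]]. apply in_seq in hv. exists v. split; [lia|].
    destruct (asbool isroot v) eqn:e; [contradiction|].
    split; [intro hr; apply (asbool_true isroot) in hr; congruence|].
    simpl in hh. destruct hh as [e'|[e'|[]]]; auto.
  - intros [v [hv [hr hh]]]. exists v. split; [apply in_seq; lia|].
    destruct (asbool isroot v) eqn:e; [apply (asbool_true isroot) in e; contradiction|].
    simpl. destruct hh; auto.
Qed.

Lemma in_sel_roots r : In r sel_roots <-> (r < N)%nat /\ isroot r.
Proof.
  unfold sel_roots. rewrite filter_In, in_seq, asbool_true. split; intros [h1 h2]; split; auto; lia.
Qed.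

Lemma nonroot_good v : ~ isroot v -> good v.
Proof. intros h. apply NNPP; intro hg; apply h; left; auto. Qed.

(* Selected edges at non-roots never backtrack: that would be a return in 2 <= L steps. *)
Lemma no_backtrack v w : (v < N)%nat -> (w < N)%nat -> ~ isroot v -> ~ isroot w ->
  sg w <> prt (sg v).
Proof.
  intros hv hw hrv hrw e. destruct (Hsg v hv) as [hinv hsv]. destruct (Hsg w hw) as [hinw hsw].
  assert (ew : w = sel_next sg v) by (rewrite <- hsw, e; reflexivity).
  assert (ev : sel_next sg w = v) by (unfold sel_next; rewrite e, Hptgt; auto).
  refine (Hret v hv (nonroot_good v hrv) 2 _ _ _); try lia.
  change (sel_next sg (sel_next sg v) = v). rewrite <- ew. exact ev.
Qed.

Lemma walk_to_root d : forall v, (v < N)%nat -> depth v = d ->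
  exists w, walk H sel_forest v w (root_of v).
Proof.
  induction d as [|d IH]; intros v hv hd.
  - exists []. simpl. unfold root_of. rewrite hd. reflexivity.
  - assert (hr : ~ isroot v) by (intro hr; rewrite depth_root in hd; auto; lia).
    rewrite depth_step in hd; auto. injection hd as hd.
    destruct (IH (sel_next sg v) (sel_next_lt v hv) hd) as [w hw].
    exists (sg v :: w). destruct (Hsg v hv) as [_ hs1]. split; [|split; auto].
    + apply in_sel_forest. exists v; auto.
    + rewrite root_of_step; auto.
Qed.

Lemma sel_forest_depth h : In h sel_forest ->
  (depth (hsrc h) = S (depth (tgt h)) /\ exists u, (u < N)%nat /\ ~ isroot u /\ h = sg u) \/
  (depth (tgt h) = S (depth (hsrc h)) /\ exists u, (u < N)%nat /\ ~ isroot u /\ h = prt (sg u)).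
Proof.
  intros hh. apply in_sel_forest in hh. destruct hh as [u [hu [hr [e|e]]]]; subst h;
    destruct (Hsg u hu) as [hin hsu].
  - left. split; [|exists u; auto]. rewrite hsu. apply depth_step; auto.
  - right. split; [|exists u; auto]. change (hsrc (prt (sg u))) with (tgt (sg u)).
    rewrite Hptgt, hsu; auto. apply depth_step; auto.
Qed.

(* Acyclicity: on a cycle, the edge leaving a vertex of maximal depth goes
   down, so the edge entering that vertex must come up from below, and it
   is the partner of the former one: the cycle backtracks. *)
Lemma sel_forest_acyclic : acyclic_sel H sel_forest.
Proof.
  intros [v0 [c [hc [hw hd]]]].
  set (dd := sg 0). set (len := length c).
  assert (hlen : (0 < len)%nat) by (unfold len; destruct c; simpl; [congruence|lia]).
  destruct (argmax (fun u => depth (hsrc (nth u c dd))) len hlen) as [t [ht hmax]]. simpl in hmax.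
  destruct (walk_nth _ _ _ _ dd hw) as [w1 [w2 w3]].
  set (e := nth t c dd).
  assert (he : In e sel_forest) by (apply (walk_edges_in _ _ _ _ _ hw), nth_In; auto).
  assert (htle : (depth (tgt e) <= depth (hsrc e))%nat).
  { unfold e. destruct (Nat.eq_dec (S t) len) as [h|h].
    - replace t with (length c - 1)%nat at 1 by (unfold len in h; lia).
      rewrite w3, <- (w1 hc) by auto. apply (hmax 0%nat); lia.
    - rewrite w2 by (unfold len in *; lia). apply hmax; lia. }
  destruct (sel_forest_depth e he) as [[hd1 [m [hm [hrm em]]]]|[hd1 _]]; [|lia].
  destruct (Hsg m hm) as [hinm hsm].
  set (q := if Nat.eq_dec t 0 then (len - 1)%nat else (t - 1)%nat).
  assert (hq : (q < len)%nat) by (unfold q; destruct (Nat.eq_dec t 0); lia).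
  set (p := nth q c dd).
  assert (hp : In p sel_forest) by (apply (walk_edges_in _ _ _ _ _ hw), nth_In; auto).
  assert (htp : tgt p = m).
  { unfold p, q. rewrite <- hsm, <- em. unfold e. destruct (Nat.eq_dec t 0) as [h|h].
    - subst t. unfold len. rewrite w3, w1; auto.
    - replace t with (S (t - 1)) at 2 by lia. apply w2. unfold len in ht; lia. }
  assert (hsp : (depth (hsrc p) <= depth m)%nat) by (rewrite <- hsm, <- em; apply hmax; auto).
  destruct (sel_forest_depth p hp) as [[hd2 _]|[hd2 [u1 [hu1 [hru1 ep]]]]];
    [rewrite htp in hd2; lia|].
  assert (u1m : u1 = m).
  { destruct (Hsg u1 hu1) as [hin1 hs1]. rewrite <- htp, ep, Hptgt; auto. }
  subst u1. rewrite <- em in ep.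
  destruct (Nat.eq_dec q t) as [hqt|hqt].
  - apply (no_backtrack m m hm hm hrm hrm). rewrite <- em, <- ep. unfold p. rewrite hqt. reflexivity.
  - destruct (hd dd t q ht hq ltac:(auto)) as [_ hne]. apply hne. fold e p.
    rewrite ep, Hpp; auto. rewrite em; auto.
Qed.

Lemma sel_forest_forest : forest sel_forest sel_roots root_of.
Proof.
  split; [|split; [|split; [|split; [|split; [|split]]]]].
  - intros h hh. apply in_sel_forest in hh. destruct hh as [v [hv [_ [e|e]]]]; subst h;
      destruct (Hsg v hv); auto.
  - intros h hh. apply in_sel_forest in hh. destruct hh as [v [hv [hr [e|e]]]]; subst h;
      apply in_sel_forest; exists v; (split; [auto|split; [auto|]]);
      [right; auto | left; destruct (Hsg v hv); rewrite Hpp; auto].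
  - intros v hv. apply in_sel_roots. destruct (root_of_spec v hv); auto.
  - intros v hv. apply (walk_to_root (depth v)); auto.
  - intros h hh. apply in_sel_forest in hh. destruct hh as [v [hv [hr [e|e]]]]; subst h;
      destruct (Hsg v hv) as [hin hsv].
    + rewrite hsv. apply root_of_step; auto.
    + change (hsrc (prt (sg v))) with (tgt (sg v)).
      rewrite Hptgt, hsv; auto. symmetry; apply root_of_step; auto.
  - intros r hr. apply in_sel_roots in hr. destruct hr. split; auto. apply root_of_root; auto.
  - apply sel_forest_acyclic.
Qed.

Definition num_bad : nat := length (filter (asbool (fun v => ~ good v)) (seq 0 N)).

Lemma filter_length_incl {X : Type} (P : X -> Prop) (l l' : list X) :
  NoDup l -> (forall x, In x l -> P x -> In x l') -> (length (filter (asbool P) l) <= length l')%nat.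
Proof.
  intros hnd hP. apply NoDup_incl_length; [apply NoDup_filter, hnd|].
  intros x hx. apply filter_In in hx. apply hP; [apply hx|apply (asbool_true P), hx].
Qed.

Theorem selection_encoding : exists T A Sr c,
  In T (sublists hs) /\ spanning_tree H T /\ In A (sublists hs) /\ In Sr (sublists hs) /\
  (S L * c <= N)%nat /\ (length A <= num_bad + c)%nat /\ (length Sr <= num_bad + c)%nat /\
  encodes sg T A Sr.
Proof.
  assert (hR0 : (length sel_roots <= num_bad + length cycle_mins)%nat)
    by exact (count_or (fun v => ~ good v) cycle_min (seq 0 N)).
  destruct (forest_extend (length sel_roots) _ _ _ (le_n _) sel_forest_forest)
    as [Ef [Aadd [hsp [hmem [hdisj [hA hlA]]]]]].
  pose proof sel_forest_forest as [hforest_hs _].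
  exists (filter (asbool (fun h => In h Ef)) hs), (filter (asbool (fun h => In h Aadd)) hs),
         (filter (asbool (fun h => isroot (hsrc h) /\ h = sg (hsrc h))) hs), (length cycle_mins).
  split; [apply filter_sublists|]. split.
  { eapply spanning_tree_ext; [|exact hsp]. intros h. rewrite filter_In, asbool_true.
    split; [|tauto]. intros hh; split; auto.
    apply hmem in hh. destruct hh as [hh|[y [hy [e|e]]]]; subst; auto. }
  split; [apply filter_sublists|]. split; [apply filter_sublists|]. split; [apply cycle_count|].
  split; [|split].
  - eapply Nat.le_trans; [apply (filter_length_incl _ hs Aadd Hnd); auto|lia].
  - eapply Nat.le_trans; [apply (filter_length_incl _ hs (map sg sel_roots) Hnd)|].
    + intros x hx [hr e]. rewrite e. apply in_map, in_sel_roots. split; auto.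
    + rewrite length_map. exact hR0.
  - exists isroot. split; [|split; [|split]].
    + intros h. rewrite filter_In, asbool_true. tauto.
    + intros h. rewrite !filter_In, !asbool_true, <- in_sel_forest. split.
      * intros [[hh hin] [hn1 hn2]]. apply hmem in hin. destruct hin as [hin|[y [hy [e|e]]]]; auto.
        -- subst; exfalso; auto.
        -- exfalso. apply hn2. split; [apply Hpin; auto|]. subst h. rewrite Hpp; auto.
      * intros hh. destruct (hdisj h hh) as [d1 d2].
        split; [split; [auto|apply hmem; auto]|]. split; intros [_ hc]; auto.
    + intros v hv. apply reach_root, hv.
    + intros v w hv hw hrv hrw. apply no_backtrack; auto.
Qed.

End ShortCycles.
End HalfEdgeGraph.

Section QuotientGraph.
Variable G : group.
Variable H : G -> Prop.
Variable f : G -> Z.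
Hypothesis hn : normal_subgroup H.
Hypothesis hfin : finite_index H.
Hypothesis hwb : well_balanced f.
Notation N := (index H).
Notation hs := (halfedges H f).

Lemma suppL_spec : NoDup (suppL f) /\ forall s, In s (suppL f) <-> (s <> gone /\ f s <> 0%Z).
Proof.
  unfold suppL. apply epsilon_spec.
  destruct hwb as [[L0 [hnd [hin _]]] _].
  exists (filter (asbool (fun s => s <> gone /\ f s <> 0%Z)) L0). split.
  - apply NoDup_filter; auto.
  - intros s. rewrite filter_In, asbool_true. split; [tauto|]. intros h; split; auto. apply hin; tauto.
Qed.

Lemma in_suppL s : In s (suppL f) <-> (s <> gone /\ f s <> 0%Z).
Proof. apply suppL_spec. Qed.

Lemma suppL_inv s : In s (suppL f) -> In (ginv s) (suppL f).
Proof.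
  rewrite !in_suppL. destruct hwb as [_ [_ [hsym _]]]. intros [h1 h2].
  split; [apply ginv_neq_one, h1|rewrite <- hsym; exact h2].
Qed.

Lemma in_halfedges (h : halfedge G) : In h hs <->
  (hsrc h < N)%nat /\ In (fst (snd h)) (suppL f) /\ (snd (snd h) < Z.abs_nat (f (fst (snd h))))%nat.
Proof.
  destruct h as [i [s k]]. unfold halfedges, hsrc. simpl. rewrite in_flat_map. split.
  - intros [i' [hi' hh]]. apply in_flat_map in hh. destruct hh as [s' [hs' hh]].
    apply in_map_iff in hh. destruct hh as [k' [e hk']]. injection e as e1 e2 e3. subst.
    apply in_seq in hi', hk'. repeat split; auto; lia.
  - intros [hi [hs' hk]]. exists i. split; [apply in_seq; lia|].
    apply in_flat_map. exists s. split; auto. apply in_map_iff. exists k. split; auto. apply in_seq; lia.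
Qed.

Lemma halfedges_nodup : NoDup hs.
Proof.
  unfold halfedges. apply NoDup_flat_map_disj.
  - apply seq_NoDup.
  - intros i _. apply NoDup_flat_map_disj.
    + apply suppL_spec.
    + intros s _. apply NoDup_map_NoDup_ForallPairs; [|apply seq_NoDup].
      intros a b _ _ e. injection e; auto.
    + intros s s' z _ _ hne hz hz'. apply in_map_iff in hz, hz'.
      destruct hz as [k [<- _]]. destruct hz' as [k' [e _]]. injection e; intros; congruence.
  - intros i j z _ _ hne hz hz'. apply in_flat_map in hz, hz'.
    destruct hz as [s [_ hz]]. destruct hz' as [s' [_ hz']].
    apply in_map_iff in hz, hz'. destruct hz as [k [<- _]]. destruct hz' as [k' [e _]].
    injection e; intros; congruence.
Qed.

Lemma halfedges_src h : In h hs -> (hsrc h < N)%nat.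
Proof. intros hh. apply in_halfedges in hh. tauto. Qed.

Lemma halfedges_tgt h : In h hs -> (htgt H h < N)%nat.
Proof. intros _. apply cidx_lt; auto. Qed.

Lemma halfedges_partner_tgt h : In h hs -> htgt H (partner H h) = hsrc h.
Proof.
  intros hh. apply in_halfedges in hh. destruct hh as [hi _].
  destruct h as [i [s k]]. unfold htgt, partner, hsrc in *. simpl in *. unfold htgt; simpl.
  rewrite cidx_mulr by auto. rewrite <- gmulA, gmulVr, gmul1r. apply cidx_rep; auto.
Qed.

Lemma halfedges_partner_partner h : In h hs -> partner H (partner H h) = h.
Proof.
  intros hh. assert (e := halfedges_partner_tgt h hh). destruct h as [i [s k]].
  unfold partner at 1. rewrite e. simpl. rewrite ginv_ginv. reflexivity.
Qed.

Lemma halfedges_partner_in h : In h hs -> In (partner H h) hs.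
Proof.
  intros hh. apply in_halfedges in hh. destruct hh as [hi [hs' hk]].
  destruct h as [i [s k]]. simpl in *. apply in_halfedges. simpl.
  split; [apply cidx_lt; auto|]. split; [apply suppL_inv, hs'|].
  destruct hwb as [_ [_ [hsym _]]]. rewrite <- hsym. exact hk.
Qed.

Lemma generator_edge g s : In s (suppL f) ->
  exists h, In h hs /\ hsrc h = cidx H g /\ htgt H h = cidx H (gmul g s).
Proof.
  intros hs'. exists (cidx H g, (s, 0%nat)). split; [|split; auto].
  - apply in_halfedges. simpl. split; [apply cidx_lt; auto|]. split; auto.
    apply in_suppL in hs'. lia.
  - unfold htgt. simpl. apply cidx_mulr; auto.
Qed.

(* Since S generates Gamma, every coset is reachable from the coset of e. *)
Lemma reach_from_one g : exists w, walk H hs (cidx H gone) w (cidx H g).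
Proof.
  destruct hwb as [_ [_ [_ hgen]]].
  assert (hstep : forall g s w, walk H hs (cidx H gone) w (cidx H g) -> s <> gone ->
            In s (suppL f) -> exists w', walk H hs (cidx H gone) w' (cidx H (gmul g s))).
  { intros g' s w hw _ hs'. destruct (generator_edge g' s hs') as [h [hh [e1 e2]]].
    exists (w ++ [h]). eapply walk_app; [exact hw|]. simpl. auto. }
  induction (hgen g) as [|g s hg [w hw] hs'|g s hg [w hw] hs'].
  - exists []. simpl; auto.
  - destruct (classic (s = gone)) as [e|e].
    + subst. rewrite gmul1r. eauto.
    + apply (hstep g s w hw e). apply in_suppL; auto.
  - destruct (classic (s = gone)) as [e|e].
    + subst. rewrite ginv_one, gmul1r. eauto.
    + apply (hstep g _ w hw (ginv_neq_one G s e)). apply suppL_inv, in_suppL; auto.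
Qed.

Lemma halfedges_connected i j : (i < N)%nat -> (j < N)%nat -> exists w, walk H hs i w j.
Proof.
  intros hi hj.
  destruct (reach_from_one (rep H i)) as [w1 hw1]. destruct (reach_from_one (rep H j)) as [w2 hw2].
  rewrite cidx_rep in hw1, hw2 by auto.
  destruct (walk_rev G H f halfedges_partner_tgt hs _ _ _ (fun h x => x) halfedges_partner_in hw1)
    as [w3 hw3].
  exists (w3 ++ w2). eapply walk_app; eauto.
Qed.

Lemma quotient_selection_encoding (sg : nat -> halfedge G) (good : nat -> Prop) (L : nat) :
  selection G H f sg -> (2 <= L)%nat ->
  (forall v, (v < N)%nat -> good v -> forall p, (1 <= p)%nat -> (p <= L)%nat -> sel_iter G H sg v p <> v) ->
  exists (T A Sr : list (halfedge G)) (c : nat),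
    In T (sublists hs) /\ spanning_tree H T /\ In A (sublists hs) /\ In Sr (sublists hs) /\
    (S L * c <= N)%nat /\ (length A <= num_bad G H good + c)%nat /\
    (length Sr <= num_bad G H good + c)%nat /\ encodes G H f sg T A Sr.
Proof.
  intros hsg hL hret. apply selection_encoding; auto using halfedges_nodup, halfedges_src,
    halfedges_tgt, halfedges_partner_in, halfedges_partner_tgt, halfedges_partner_partner,
    halfedges_connected, index_pos.
Qed.

Lemma quotient_encodes_unique sg sg' T A Sr : selection G H f sg -> selection G H f sg' ->
  encodes G H f sg T A Sr -> encodes G H f sg' T A Sr -> forall v, (v < N)%nat -> sg v = sg' v.
Proof. apply encodes_unique; auto using halfedges_partner_tgt, halfedges_partner_partner. Qed.

End QuotientGraph.

Section RealSums.
Local Open Scope R_scope.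

Definition rsum {X : Type} (F : X -> R) (l : list X) : R := fold_right Rplus 0 (map F l).

Lemma rsum_nonneg {X : Type} (F : X -> R) l : (forall x, 0 <= F x) -> 0 <= rsum F l.
Proof. intros h. unfold rsum. induction l as [|x l IH]; simpl; [lra|]. specialize (h x). lra. Qed.

Lemma rsum_le {X : Type} (F F' : X -> R) l :
  (forall x, In x l -> F x <= F' x) -> rsum F l <= rsum F' l.
Proof.
  unfold rsum. induction l as [|x l IH]; intros h; simpl; [lra|].
  assert (h1 := h x (or_introl eq_refl)).
  assert (h2 := IH (fun y hy => h y (or_intror hy))). lra.
Qed.

Lemma rsum_elem {X : Type} (F : X -> R) l x : In x l -> (forall y, 0 <= F y) -> F x <= rsum F l.
Proof.
  induction l as [|y l IH]; intros hx h; [contradiction|].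
  assert (0 <= rsum F l) by (apply rsum_nonneg; auto).
  unfold rsum in *; simpl. destruct hx as [e|hx].
  - subst. lra.
  - specialize (IH hx h). specialize (h y). lra.
Qed.

Lemma rsum_swap {X Y : Type} (F : X -> Y -> R) (l : list X) (m : list Y) :
  rsum (fun x => rsum (F x) m) l = rsum (fun y => rsum (fun x => F x y) l) m.
Proof.
  induction l as [|x l IH]; unfold rsum in *; simpl.
  - induction m as [|y m IHm]; simpl; auto; lra.
  - rewrite IH. clear IH. induction m as [|y m IHm]; simpl; [lra|]. rewrite <- IHm. lra.
Qed.

Lemma rsum_const {X : Type} (c : R) (l : list X) : rsum (fun _ => c) l = INR (length l) * c.
Proof.
  induction l as [|x l IH]; unfold rsum in *; cbn [map fold_right length]; [simpl; lra|].
  rewrite IH, S_INR. lra.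
Qed.

Lemma rsum_app {X : Type} (F : X -> R) l m : rsum F (l ++ m) = rsum F l + rsum F m.
Proof. induction l as [|x l IH]; unfold rsum in *; simpl; [ring|]. rewrite IH. ring. Qed.

Lemma rsum_scal {X : Type} (F : X -> R) k l : rsum (fun x => k * F x) l = k * rsum F l.
Proof. induction l as [|x l IH]; unfold rsum in *; simpl; [ring|]. rewrite IH. ring. Qed.

Lemma count_rsum {X : Type} (P : X -> Prop) (l : list X) :
  INR (length (filter (asbool P) l)) = rsum (fun x => if asbool P x then 1 else 0) l.
Proof.
  induction l as [|x l IH]; unfold rsum in *; cbn [map fold_right filter]; auto.
  destruct (asbool P x); cbn [length]; rewrite <- IH; [rewrite S_INR|]; lra.
Qed.

Lemma fold_Rmax_zero (l : list R) : (forall a, In a l -> a = 0) -> fold_right Rmax 0 l = 0.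
Proof.
  induction l as [|a l IH]; simpl; intros h; auto. rewrite IH, (h a) by auto.
  unfold Rmax. destruct (Rle_dec 0 0); lra.
Qed.

Lemma rms_bound (n S d : R) : 0 < n -> 0 <= S -> sqrt (/ n * S) <= d -> S <= d ^ 2 * n.
Proof.
  intros hn hS hd. set (x := / n * S) in *.
  assert (hx : 0 <= x) by (unfold x; apply Rmult_le_pos; [left; apply Rinv_0_lt_compat|]; auto).
  assert (hxd : x <= d ^ 2).
  { rewrite <- (sqrt_sqrt x hx). simpl. rewrite Rmult_1_r.
    assert (0 <= sqrt x) by apply sqrt_pos. apply Rmult_le_compat; auto. }
  assert (S = n * x) by (unfold x; field; lra). nra.
Qed.

End RealSums.

Section MapsIntoFf.
Variable G : group.
Variable f : G -> Z.
Hypothesis hwb : well_balanced f.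

Fixpoint ball (n : nat) : list G :=
  match n with
  | O => [gone]
  | S n => ball n ++ flat_map (fun b => map (gmul b) (suppL f)) (ball n)
  end.

Lemma ball_mono n m : (n <= m)%nat -> incl (ball n) (ball m).
Proof.
  induction 1 as [|m _ IH]; [apply incl_refl|].
  intros x hx. apply in_or_app. left. apply IH, hx.
Qed.

Fixpoint fpath (y : G -> G * nat) (t : nat) : G :=
  match t with O => gone | S t => gmul (fpath y t) (fst (y (fpath y t))) end.

Lemma fpath_ball y t : (forall g, in_Sstar f (y g)) -> In (fpath y t) (ball t).
Proof.
  intros hy. induction t as [|t IH]; simpl; auto.
  apply in_or_app. right. apply in_flat_map. exists (fpath y t). split; auto.
  apply in_map, in_suppL; auto. destruct (hy (fpath y t)) as [h1 [h2 _]]; auto.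
Qed.

Lemma fpath_no_return y p : Ff f y -> (1 <= p)%nat -> fpath y p <> gone.
Proof. intros [_ [_ h3]] hp e. apply h3. exists (fpath y), p. auto. Qed.

Variable H : G -> Prop.
Hypothesis hn : normal_subgroup H.
Hypothesis hfin : finite_index H.
Notation N := (index H).
Notation A := (G * nat)%type.

Variable L : nat.
Hypothesis HL : (2 <= L)%nat.
Hypothesis Havoid : forall g, In g (ball L) -> H g -> g = gone.

Definition window : list G := map ginv (ball L).

Section OneMap.
Variable phi : nat -> G -> A.
Hypothesis hphiF : forall i, (i < N)%nat -> Ff f (phi i).

Definition good_point (i : nat) : Prop :=
  forall s, In s window -> rho (phi (cidx H (gmul s (rep H i)))) (Defs.shift s (phi i)) = 0%R.
Definition good_vertex (v : nat) : Prop := good_point (iota G H v).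

Definition map_selection (v : nat) : halfedge G := (v, phi (iota G H v) gone).

Lemma map_selection_ok : selection G H f map_selection.
Proof.
  intros v hv. split; [|reflexivity]. apply in_halfedges; auto. simpl. split; auto.
  destruct (hphiF _ (iota_lt G H hfin v)) as [h1 _]. destruct (h1 gone) as [a [b c]].
  split; auto. apply in_suppL; auto.
Qed.

Lemma rho_zero (x y : G -> A) : rho x y = 0%R -> x gone = y gone.
Proof. unfold rho. destruct (excluded_middle_informative (x gone = y gone)); auto. intros; lra. Qed.

Lemma map_selection_tracks v : (v < N)%nat -> good_vertex v -> forall t, (t <= L)%nat ->
  iota G H (sel_iter G H map_selection v t) =
  cidx H (gmul (ginv (fpath (phi (iota G H v)) t)) (rep H (iota G H v))).
Proof.
  intros hv hg. set (i := iota G H v). set (y := phi i).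
  assert (hi : (i < N)%nat) by apply iota_lt, hfin.
  assert (hy : Ff f y) by (apply hphiF, hi).
  induction t as [|t IH]; intros ht.
  - simpl. rewrite ginv_one, gmul1l, cidx_rep; auto.
  - change (iota G H (htgt H (map_selection (sel_iter G H map_selection v t))) =
            cidx H (gmul (ginv (fpath y (S t))) (rep H i))).
    unfold map_selection at 1, htgt. simpl fst. rewrite iota_step, IH by (auto; lia).
    assert (hgw : In (ginv (fpath y t)) window).
    { apply in_map. apply (ball_mono t L ltac:(lia)), fpath_ball, hy. }
    specialize (hg _ hgw). apply rho_zero in hg. unfold Defs.shift in hg.
    rewrite ginv_ginv, gmul1r in hg. fold i y in hg. rewrite hg, cidx_mull by auto.
    simpl fpath. rewrite ginv_mul, <- gmulA. reflexivity.
Qed.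

(* Hence the selection cannot return to a good vertex within L steps: the
   path would give an element of the ball of radius L in Gamma_n. *)
Lemma map_selection_no_return v : (v < N)%nat -> good_vertex v ->
  forall p, (1 <= p)%nat -> (p <= L)%nat -> sel_iter G H map_selection v p <> v.
Proof.
  intros hv hg p hp1 hpL e.
  set (i := iota G H v). set (y := phi i).
  assert (hi : (i < N)%nat) by apply iota_lt, hfin.
  assert (hy : Ff f y) by (apply hphiF, hi).
  assert (ht := map_selection_tracks v hv hg p hpL). rewrite e in ht. fold i y in ht.
  rewrite <- (cidx_rep G H hfin i hi) in ht at 1.
  apply (cidx_eq_inv G H hn hfin) in ht. unfold coset_eq in ht.
  apply (nsub_conj G H hn (rep H i)) in ht.
  rewrite mulVK, <- gmulA, gmulVr, gmul1r in ht. apply (nsub_inv G H hn) in ht.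
  rewrite ginv_ginv in ht.
  apply (fpath_no_return y p hy hp1), Havoid; auto.
  apply (ball_mono p L hpL), fpath_ball, hy.
Qed.


Definition defect (s : G) (i : nat) : R :=
  (rho (phi (cidx H (gmul s (rep H i)))) (Defs.shift s (phi i)) ^ 2)%R.

Lemma defect_nonneg s i : (0 <= defect s i)%R.
Proof. apply pow2_ge_0. Qed.

Lemma num_bad_vertices :
  (num_bad G H good_vertex <= length (filter (asbool (fun i => ~ good_point i)) (seq 0 N)))%nat.
Proof.
  unfold num_bad. set (l1 := filter _ (seq 0 N)).
  rewrite <- (length_map (iota G H) l1). apply NoDup_incl_length.
  - apply NoDup_map_NoDup_ForallPairs; [|apply NoDup_filter, seq_NoDup].
    intros a b ha hb e. unfold l1 in ha, hb. apply filter_In in ha, hb.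
    destruct ha as [ha _]. destruct hb as [hb _]. apply in_seq in ha, hb.
    rewrite <- (iota_iota G H hn hfin a), <- (iota_iota G H hn hfin b), e; auto; lia.
  - intros x hx. apply in_map_iff in hx. destruct hx as [v [<- hv]].
    apply filter_In in hv. destruct hv as [_ hv].
    apply filter_In. split; [apply in_seq; split; [lia|apply iota_lt, hfin]|].
    apply asbool_true. exact (proj1 (asbool_true (fun v => ~ good_vertex v) v) hv).
Qed.

(* Each bad point contributes a defect 1 for some direction of the window. *)
Lemma bad_points_le_defect :
  (INR (length (filter (asbool (fun i => ~ good_point i)) (seq 0 N))) <=
   rsum (fun s => rsum (defect s) (seq 0 N)) window)%R.
Proof.
  rewrite count_rsum, rsum_swap. apply rsum_le. intros i _.
  destruct (asbool (fun i => ~ good_point i) i) eqn:e.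
  - apply (asbool_true (fun i => ~ good_point i)) in e. unfold good_point in e.
    apply not_all_ex_not in e. destruct e as [s e]. apply imply_to_and in e. destruct e as [hs e].
    eapply Rle_trans; [|apply (rsum_elem (fun s => defect s i) window s hs (fun s => defect_nonneg s i))].
    unfold defect, rho in *. destruct (excluded_middle_informative _); [contradiction|lra].
  - apply rsum_nonneg. intros s; apply defect_nonneg.
Qed.

Lemma num_bad_bound (delta : R) : in_Map (Ff f) H window delta phi ->
  (INR (num_bad G H good_vertex) <= INR (length window) * delta ^ 2 * INR N)%R.
Proof.
  intros [_ hM].
  assert (hdir : forall s, In s window -> (rsum (defect s) (seq 0 N) <= delta ^ 2 * INR N)%R).
  { intros s hs. apply rms_bound; [apply lt_0_INR, index_pos, hfin|apply rsum_nonneg, defect_nonneg|].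
    apply hM, hs. }
  assert (hvert := le_INR _ _ num_bad_vertices).
  assert (hsum := rsum_le _ _ window hdir). rewrite rsum_const in hsum.
  assert (hbad := bad_points_le_defect). lra.
Qed.

End OneMap.

Definition code_size (delta : R) : R :=
  (INR (length window) * delta ^ 2 * INR N + INR N / INR (S L))%R.

Definition small_sets (delta : R) : list (list (halfedge G)) :=
  filter (asbool (fun l : list (halfedge G) => (INR (length l) <= code_size delta)%R))
         (sublists (halfedges H f)).
Definition spanning_trees : list (list (halfedge G)) :=
  filter (asbool (spanning_tree H)) (sublists (halfedges H f)).

Definition codes (delta : R) :=
  list_prod (list_prod spanning_trees (small_sets delta)) (small_sets delta).

Lemma map_code_exists (delta : R) (phi : nat -> G -> A) : in_Map (Ff f) H window delta phi ->
  exists c, In c (codes delta) /\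
    encodes G H f (map_selection phi) (fst (fst c)) (snd (fst c)) (snd c).
Proof.
  intros hM. assert (hF : forall i, (i < N)%nat -> Ff f (phi i)) by apply hM.
  destruct (quotient_selection_encoding G H f hn hfin hwb _ (good_vertex phi) L
      (map_selection_ok phi hF) HL (map_selection_no_return phi hF))
    as [T [Aa [Sr [c [hT [hsp [hA [hS [hc [hlA [hlS henc]]]]]]]]]]].
  exists (T, Aa, Sr). split; [|exact henc].
  assert (hnb := num_bad_bound phi delta hM).
  assert (hcN : (INR c <= INR N / INR (S L))%R).
  { apply le_INR in hc. rewrite mult_INR in hc. assert (0 < INR (S L))%R by (apply lt_0_INR; lia).
    unfold Rdiv. apply (Rmult_le_reg_l (INR (S L))); auto.
    rewrite (Rmult_comm (INR N)), <- Rmult_assoc, Rinv_r; lra. }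
  assert (hsmall : forall l : list (halfedge G), (length l <= num_bad G H (good_vertex phi) + c)%nat ->
                   In l (sublists (halfedges H f)) -> In l (small_sets delta)).
  { intros l hl hin. apply filter_In. split; auto. apply asbool_true.
    apply le_INR in hl. rewrite plus_INR in hl. unfold code_size. lra. }
  apply in_prod; [apply in_prod|]; auto.
  apply filter_In. split; auto. apply asbool_true; auto.
Qed.

Lemma same_selection_close (phi psi : nat -> G -> A) :
  (forall v, (v < N)%nat -> map_selection phi v = map_selection psi v) -> rho_inf H phi psi = 0%R.
Proof.
  intros hsel. unfold rho_inf. apply fold_Rmax_zero.
  intros a ha. apply in_map_iff in ha. destruct ha as [k [<- hk]]. apply in_seq in hk.
    specialize (hsel _ (iota_lt G H hfin k)). unfold map_selection in hsel.
    injection hsel as hsel. rewrite (iota_iota G H hn hfin k) in hsel by lia.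
  unfold rho. destruct (excluded_middle_informative _); [reflexivity|contradiction].
Qed.

(* The key counting bound: an eps-separated family in Map(W, delta, Gamma_n)
   injects into the codes. *)
Theorem separated_family_bound (delta eps : R) (F : list (nat -> G -> A)) : (0 < eps)%R ->
  (forall phi, In phi F -> in_Map (Ff f) H window delta phi) -> separated H eps F ->
  (length F <= tau H f * length (small_sets delta) * length (small_sets delta))%nat.
Proof.
  intros heps hM hsep.
  set (spec := fun phi c => In c (codes delta) /\
         encodes G H f (map_selection phi) (fst (fst c)) (snd (fst c)) (snd c)).
  set (code := fun phi => epsilon (inhabits ([], [], [])) (spec phi)).
  assert (hcode : forall phi, In phi F -> spec phi (code phi)).
  { intros phi hphi. apply epsilon_spec, map_code_exists, hM, hphi. }
  set (d0 := fun (_ : nat) (_ : G) => (@gone G, 0%nat)).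
  assert (hnd : NoDup (map code F)).
  { apply (NoDup_nth (map code F) (code d0)). rewrite length_map. intros i j hi hj e.
    rewrite !map_nth in e. apply NNPP; intro hij.
    destruct (hcode _ (nth_In F d0 hi)) as [_ r1]. destruct (hcode _ (nth_In F d0 hj)) as [_ r2].
    rewrite e in r1.
    assert (hF1 : forall k, (k < N)%nat -> Ff f (nth i F d0 k)) by (apply hM, nth_In, hi).
    assert (hF2 : forall k, (k < N)%nat -> Ff f (nth j F d0 k)) by (apply hM, nth_In, hj).
    assert (h0 := same_selection_close _ _
      (quotient_encodes_unique G H f hn hfin _ _ _ _ _
         (map_selection_ok _ hF1) (map_selection_ok _ hF2) r1 r2)).
    specialize (hsep d0 i j hi hj hij). lra. }
  assert (hinc : incl (map code F) (codes delta)).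
  { intros c hc. apply in_map_iff in hc. destruct hc as [phi [<- hphi]]. apply hcode, hphi. }
  assert (h := NoDup_incl_length hnd hinc).
  rewrite length_map in h. unfold codes in h. rewrite !length_prod in h. exact h.
Qed.

End MapsIntoFf.

Section Estimates.
Local Open Scope R_scope.

Lemma exp_le_mono x y : x <= y -> exp x <= exp y.
Proof. intros h. destruct (Rle_lt_or_eq_dec _ _ h) as [h'|<-]; [left; apply exp_increasing; auto|lra]. Qed.

Lemma ln_le_mono x y : 0 < x -> x <= y -> ln x <= ln y.
Proof. intros hx h. destruct (Rle_lt_or_eq_dec _ _ h) as [h'|<-]; [left; apply ln_increasing; auto|lra]. Qed.

Lemma neg_ln_pos x : 0 < x < 1 -> 0 < - ln x.
Proof. intros hx. assert (ln x < 0) by (rewrite <- ln_1; apply ln_increasing; lra). lra. Qed.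

Lemma sum_pow_sublists {X : Type} (x : R) (l : list X) :
  rsum (fun m => x ^ length m) (sublists l) = (1 + x) ^ length l.
Proof.
  induction l as [|a l IH]; [unfold rsum; simpl; ring|].
  simpl sublists. rewrite rsum_app. unfold rsum at 1. rewrite map_map.
  change (rsum (fun m => x * x ^ length m) (sublists l) +
          rsum (fun m => x ^ length m) (sublists l) = (1 + x) ^ S (length l)).
  rewrite rsum_scal, IH. simpl. ring.
Qed.

Lemma small_subsets_bound {X : Type} (l : list X) (K x : R) : 0 < x < 1 ->
  INR (length (filter (asbool (fun m : list X => INR (length m) <= K)) (sublists l))) <=
  exp (K * - ln x) * (1 + x) ^ length l.
Proof.
  intros hx. rewrite count_rsum, <- sum_pow_sublists, <- rsum_scal. apply rsum_le. intros m _.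
  assert (hp : 0 < x ^ length m) by (apply pow_lt; lra).
  assert (0 < exp (K * - ln x)) by apply exp_pos.
  destruct (asbool (fun m : list X => INR (length m) <= K) m) eqn:e; [|nra].
  apply (asbool_true (fun m : list X => INR (length m) <= K)) in e.
  rewrite <- (Rpower_pow (length m) x) by lra. unfold Rpower.
  rewrite <- exp_plus, <- exp_0. apply exp_le_mono.
  assert (hlnx := neg_ln_pos x hx). nra.
Qed.

Definition degree {G : group} (f : G -> Z) : nat :=
  length (flat_map (fun s => map (fun k => (s, k)) (seq 0 (Z.abs_nat (f s)))) (suppL f)).

Lemma length_halfedges {G : group} (H : G -> Prop) (f : G -> Z) :
  length (halfedges H f) = (index H * degree f)%nat.
Proof.
  unfold halfedges. rewrite (length_flat_map_const _ _ (degree f)), length_seq; auto.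
  intros i. unfold degree. induction (suppL f) as [|s l IH]; [reflexivity|].
  cbn [flat_map]. rewrite !length_app, !length_map. f_equal. exact IH.
Qed.

(* With (1+x)^k <= exp(k x): log #{edge sets of size <= K} <= K log(1/x) + N D x. *)
Lemma ln_small_sets {G : group} (f : G -> Z) (H : G -> Prop) (K x : R) : 0 < x < 1 ->
  let M := length (filter (asbool (fun m : list (halfedge G) => INR (length m) <= K))
                          (sublists (halfedges H f))) in
  (0 < M)%nat -> ln (INR M) <= K * - ln x + INR (index H) * INR (degree f) * x.
Proof.
  intros hx M hM. rewrite <- (ln_exp (_ + _)). apply ln_le_mono; [apply lt_0_INR, hM|].
  eapply Rle_trans; [apply small_subsets_bound, hx|]. rewrite exp_plus.
  apply Rmult_le_compat_l; [left; apply exp_pos|].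
  rewrite length_halfedges.
  assert (hpow : forall k, (1 + x) ^ k <= exp (INR k * x)).
  { induction k as [|k IH]; [simpl; rewrite Rmult_0_l, exp_0; lra|].
    rewrite S_INR, Rmult_plus_distr_r, Rmult_1_l, exp_plus, Rmult_comm. simpl pow.
    apply Rmult_le_compat; try lra; [apply pow_le; lra|apply exp_ineq1_le]. }
  rewrite <- mult_INR. apply hpow.
Qed.

(* Choice of the parameters x, L and delta, each making its contribution to
   the exponent of the counting bound at most gam/8 per vertex. *)
Lemma choose_x (gam : R) (D : nat) : 0 < gam -> exists x, 0 < x < 1 /\ INR D * x <= gam / 8.
Proof.
  intros hg. assert (hD : 0 <= INR D) by apply pos_INR.
  exists (Rmin (1/2) (gam / (8 * (INR D + 1)))).
  assert (hx1 := Rmin_l (1/2) (gam / (8 * (INR D + 1)))).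
  assert (hx2 := Rmin_r (1/2) (gam / (8 * (INR D + 1)))).
  assert (hpos : 0 < Rmin (1/2) (gam / (8 * (INR D + 1))))
    by (apply Rmin_pos; [lra|apply Rdiv_lt_0_compat; lra]).
  split; [lra|].
  apply Rmult_le_compat_l with (r := INR D + 1) in hx2; [|lra].
  replace ((INR D + 1) * (gam / (8 * (INR D + 1)))) with (gam / 8) in hx2 by (field; lra). nra.
Qed.

Lemma choose_L (gam a : R) : 0 < gam -> 0 < a -> exists L, (2 <= L)%nat /\ a / INR (S L) <= gam / 8.
Proof.
  intros hg ha. destruct (INR_unbounded (8 * a / gam)) as [n hn].
  exists (n + 2)%nat. split; [lia|].
  assert (hSL : 8 * a / gam < INR (S (n + 2))) by (eapply Rlt_le_trans; [apply hn|apply le_INR; lia]).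
  assert (hSL0 : 0 < INR (S (n + 2))) by (apply lt_0_INR; lia).
  apply Rmult_lt_compat_r with (r := gam / 8) in hSL; [|lra].
  replace (8 * a / gam * (gam / 8)) with a in hSL by (field; lra).
  unfold Rdiv. apply (Rmult_le_reg_r (INR (S (n + 2)))); auto.
  rewrite Rmult_assoc, Rinv_l by lra. lra.
Qed.

Lemma choose_delta (gam a : R) (wl : nat) : 0 < gam -> 0 < a ->
  exists delta, 0 < delta /\ INR wl * delta ^ 2 * a <= gam / 8.
Proof.
  intros hg ha. assert (hw : 0 <= INR wl) by apply pos_INR.
  set (q := gam / (8 * a * (INR wl + 1))).
  assert (hq : 0 < q) by (unfold q; apply Rdiv_lt_0_compat; nra).
  exists (sqrt q). split; [apply sqrt_lt_R0; auto|].
  replace (sqrt q ^ 2) with q by (simpl; rewrite Rmult_1_r, sqrt_sqrt; lra).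
  unfold q. replace (INR wl * (gam / (8 * a * (INR wl + 1))) * a)
    with (gam / 8 * (INR wl / (INR wl + 1))) by (field; lra).
  assert (INR wl / (INR wl + 1) <= 1).
  { apply Rmult_le_reg_r with (INR wl + 1); [lra|].
    unfold Rdiv; rewrite Rmult_assoc, Rinv_l; lra. }
  nra.
Qed.

End Estimates.

Lemma ball_avoids_eventually (G : group) (Gs : nat -> G -> Prop)
  (hsofic : forall g : G, (forall n, exists i, (n <= i)%nat /\ Gs i g) -> g = gone) (l : list G) :
  exists n0, forall n, (n0 <= n)%nat -> forall g, In g l -> Gs n g -> g = gone.
Proof.
  induction l as [|a l [n1 IH]]; [exists 0%nat; intros n _ g []|].
  destruct (classic (a = gone)) as [ea|ea].
  - exists n1. intros n hn g [e|hg] hG; [subst; auto|]. apply (IH n hn); auto.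
  - assert (hn : ~ (forall n, exists i, (n <= i)%nat /\ Gs i a)) by (intro h; apply ea, hsofic, h).
    apply not_all_ex_not in hn. destruct hn as [n2 hn2].
    exists (Nat.max n1 n2). intros n hn g [<-|hg] hG.
    + exfalso. apply hn2. exists n. split; [lia|auto].
    + apply (IH n); auto; lia.
Qed.

Section OneLevel.
Local Open Scope R_scope.
Variable G : group.
Variable f : G -> Z.
Hypothesis hwb : well_balanced f.
Variable H : G -> Prop.
Hypothesis hn : normal_subgroup H.
Hypothesis hfin : finite_index H.
Variables (x delta eps c c' : R) (L : nat).
Hypothesis hx : 0 < x < 1.
Hypothesis HL : (2 <= L)%nat.
Hypothesis Havoid : forall g, In g (ball G f L) -> H g -> g = gone.
Hypothesis heps : 0 < eps.
Hypothesis hcc : c' < c.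
Hypothesis hx_small : INR (degree f) * x <= (c - c') / 8.
Hypothesis hL_large : - ln x / INR (S L) <= (c - c') / 8.
Hypothesis hdelta_small : INR (length (window G f L)) * delta ^ 2 * - ln x <= (c - c') / 8.
Hypothesis htau : Rbar_lt (Rbar_scale (/ INR (index H)) (Rbar_lognat (tau H f))) (Fin c').

Notation N := (INR (index H)).

Lemma N_pos : 0 < N.
Proof. apply lt_0_INR, index_pos, hfin. Qed.

(* log M <= K log(1/x) + N D x <= (3/8)(c - c') N for the number M of small sets *)
Lemma ln_small_sets_le : (0 < length (small_sets G f H L delta))%nat ->
  ln (INR (length (small_sets G f H L delta))) <= 3 / 8 * (c - c') * N.
Proof.
  intros hM. eapply Rle_trans; [apply (ln_small_sets f H (code_size G f H L delta) x hx hM)|].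
  assert (hlnx := neg_ln_pos x hx).
  assert (hN := N_pos). unfold code_size.
  replace ((INR (length (window G f L)) * delta ^ 2 * N + N / INR (S L)) * - ln x + N * INR (degree f) * x)
    with (N * (INR (length (window G f L)) * delta ^ 2 * - ln x + - ln x / INR (S L) + INR (degree f) * x))
    by (field; apply not_0_INR; lia).
  nra.
Qed.

Lemma ln_tau_lt : (0 < tau H f)%nat -> ln (INR (tau H f)) < c' * N.
Proof.
  intros htp. assert (hN := N_pos). unfold Rbar_lt, Rbar_lognat in htau.
  destruct (tau H f) as [|t]; [lia|]. apply Rnot_le_lt in htau.
  apply Rmult_lt_compat_l with (r := N) in htau; auto.
  rewrite <- Rmult_assoc, Rinv_r, Rmult_1_l in htau by lra. lra.
Qed.

(* For every eps-separated family F in Map(W, delta, Gamma_n):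
   log |F| <= log tau + 2 log M < c' N + (3/4)(c - c') N <= c N. *)
Lemma level_bound :
  Rbar_le (Rbar_scale (/ N) (logN (Ff f) H eps (window G f L) delta)) (Fin c).
Proof.
  assert (hN := N_pos).
  replace c with (/ N * (c * N)) by (field; lra).
  apply scale_le; [apply Rinv_0_lt_compat; auto|].
  apply sup_le. intros z [F [hM [hsep ->]]].
  assert (hcnt := separated_family_bound G f hwb H hn hfin L HL Havoid delta eps F heps hM hsep).
  set (M := length (small_sets G f H L delta)) in *.
  destruct (length F) as [|lf] eqn:elf; [simpl; auto|].
  change (ln (INR (S lf)) <= c * N). rewrite <- elf.
  assert (htp : (0 < tau H f)%nat) by (destruct (tau H f); simpl in hcnt; lia).
  assert (hMp : (0 < M)%nat) by (destruct M; [rewrite Nat.mul_0_r in hcnt|]; lia).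
  assert (hlnF : ln (INR (length F)) <= ln (INR (tau H f)) + 2 * ln (INR M)).
  { rewrite elf. eapply Rle_trans; [apply ln_le_mono; [apply lt_0_INR; lia|apply le_INR, hcnt]|].
    assert (0 < INR (tau H f)) by (apply lt_0_INR; lia).
    assert (0 < INR M) by (apply lt_0_INR; lia).
    rewrite !mult_INR, !ln_mult by (try apply Rmult_lt_0_compat; auto). lra. }
  assert (h1 := ln_tau_lt htp). assert (h2 := ln_small_sets_le hMp). unfold M in *. nra.
Qed.

End OneLevel.

Theorem lemma8p8 (G : group) (Gs : nat -> G -> Prop) (f : G -> Z)
  (hG : countably_infinite G)
  (hnorm : forall n, normal_subgroup (Gs n))
  (hfin : forall n, finite_index (Gs n))
  (hsofic : forall g : G, (forall n, exists i, (n <= i)%nat /\ Gs i g) -> g = gone)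
  (hf : well_balanced f) :
  Rbar_le (sofic_entropy Gs (Ff f))
          (Rbar_limsup (fun n => Rbar_scale (/ INR (index (Gs n))) (Rbar_lognat (tau (Gs n) f)))).
Proof.
  apply sup_le. intros v [eps [heps ->]].
  apply le_of_forall_gt. intros c hc.
  destruct (lt_between _ _ hc) as [c' [hc' hcc']].
  destruct (limsup_lt_eventually _ _ hc') as [N0 hN0].
  assert (hgam : (0 < c - c')%R) by lra.
  destruct (choose_x (c - c') (degree f) hgam) as [x [hx hxs]].
  assert (hlnx := neg_ln_pos x hx).
  destruct (choose_L (c - c') (- ln x) hgam hlnx) as [L [hL hLs]].
  destruct (choose_delta (c - c') (- ln x) (length (window G f L)) hgam hlnx) as [delta [hdelta hds]].
  destruct (ball_avoids_eventually G Gs hsofic (ball G f L)) as [n0 hn0].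
  eapply Rbar_le_trans; [apply inf_le; exists (window G f L); reflexivity|].
  eapply Rbar_le_trans; [apply inf_le; exists delta; split; [exact hdelta|reflexivity]|].
  apply (limsup_le_eventually _ _ (Nat.max N0 n0)). intros n hn.
  apply (level_bound G f hf (Gs n) (hnorm n) (hfin n) x delta eps c c' L); auto; try lra.
  - intros g hg hGs. apply (hn0 n ltac:(lia) g hg hGs).
  - apply hN0. lia.
Qed.
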